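(* Let $\mathcal{C}$ be a set of node-disjoint chains with node set $V=\{1,\ldots,n\}$, $T$ a time function for $\mathcal{C}$, and $t_0<t_1$ real numbers. Let $V_C\subseteq V$ with input matrix $B$. Then every LTV system $\dot x(t)=A(t)x(t)+Bu(t)$ with $A(\cdot)$ piecewise continuous and $A(t)\in\mathcal{P}(\mathcal{G}^{\mathcal{C},T})$ for almost every $t\in\mathbb{R}$ is controllable on $[t_0,t_1]$ if and only if $V_C$ contains the set of sources of $\mathcal{C}$.
   Context: Graphs are directed, self-loops allowed. $\mathcal{Q}(G)=\{A\in\mathbb{R}^{n\times n}:\text{for } i\neq j,\ A_{ij}\neq0\iff(j,i)\in E(G)\}$. For $V_C=\{j_1,\ldots,j_m\}$, $B=[e_{j_1},\ldots,e_{j_m}]$ with $e_j$ the $j$th column of $I_n$. An LTV system is controllable on $[t_0,t_1]$ if for any initial state at time $t_0$ and any final state there is an input steering the system from the initial state at $t_0$ to the final state at $t_1$. A chain is a directed path graph with source (start node) and sink (end node); for a non-sink $v$, $v+1$ is its out-neighbor. For node-disjoint chains $\mathcal{C}=\{C_1,\ldots,C_m\}$, $V=\bigcup_iV(C_i)$, $\gamma=|V|-m+1$, a time function is $T:V\to\{1,\ldots,\gamma\}$ with (1) $T(v)=1$ for every source; (2) distinct non-source nodes get distinct values; (3) $T(v)<T(v+1)$ for non-sink $v$. $T_{\max}(v)=\gamma$ for a sink $v$, else $T_{\max}(v)=T(v+1)-1$. $\mathcal{G}^{\mathcal{C},T}$ is the set of graphs $G$ with $V(G)=V$, $\bigcup_iE(C_i)\subseteq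 E(G)$, and $(u,v)\notin E(G)$ whenever $(u,v)\notin\bigcup_iE(C_i)$ and $T_{\max}(u)<T(v)$. $\mathcal{P}(\mathcal{G}^{\mathcal{C},T})=\{A\in\mathbb{R}^{n\times n}: A\in\mathcal{Q}(G)\text{ for some }G\in\mathcal{G}^{\mathcal{C},T}\}$. *)

From Stdlib Require Import Reals Lra List Arith.
From Coquelicot Require Import Coquelicot.
Import ListNotations.
Open Scope R_scope.

Definition inV (n v : nat) : Prop := (1 <= v <= n)%nat.

(* A chain is a nonempty list of nodes [v_1; ...; v_k] (the directed path
   v_1 -> v_2 -> ... -> v_k); its source is v_1, its sink v_k.
   A set of node-disjoint chains is a list of chains. *)
Definition chains_ok (n : nat) (C : list (list nat)) : Prop :=
  (forall c, In c C -> c <> []) /\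
  NoDup (concat C) /\
  (forall v, In v (concat C) <-> inV n v).

Definition chain_edge (C : list (list nat)) (u v : nat) : Prop :=
  exists c, In c C /\
    exists i, (S i < length c)%nat /\ nth i c 0%nat = u /\ nth (S i) c 0%nat = v.

Definition is_source (C : list (list nat)) (v : nat) : Prop :=
  exists c, In c C /\ hd_error c = Some v.

(* out-neighbour v+1 of a non-sink node v (None for sinks) *)
Fixpoint succ_chain (c : list nat) (v : nat) : option nat :=
  match c with
  | a :: ((b :: _) as r) => if Nat.eqb a v then Some b else succ_chain r v
  | _ => None
  end.

Fixpoint succ (C : list (list nat)) (v : nat) : option nat :=
  match C with
  | [] => None
  | c :: C' => match succ_chain c v with
               | Some w => Some w
               | None => succ C' v
               end
  end.

Definition gamma (n : nat) (C : list (list nat)) : nat := (n - length C + 1)%nat.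

Definition time_function (n : nat) (C : list (list nat)) (T : nat -> nat) : Prop :=
  (forall v, inV n v -> (1 <= T v <= gamma n C)%nat) /\
  (forall v, is_source C v -> T v = 1%nat) /\
  (forall u v, inV n u -> inV n v -> ~ is_source C u -> ~ is_source C v ->
     u <> v -> T u <> T v) /\
  (forall u v, chain_edge C u v -> (T u < T v)%nat).

Definition Tmax (n : nat) (C : list (list nat)) (T : nat -> nat) (v : nat) : nat :=
  match succ C v with
  | Some w => (T w - 1)%nat
  | None => gamma n C
  end.

(* A directed graph on V (self-loops allowed) is given by its edge relation. *)
Definition in_graph_class (n : nat) (C : list (list nat)) (T : nat -> nat)
    (E : nat -> nat -> Prop) : Prop :=
  (forall u v, E u v -> inV n u /\ inV n v) /\
  (forall u v, chain_edge C u v -> E u v) /\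
  (forall u v, inV n u -> inV n v -> ~ chain_edge C u v ->
     (Tmax n C T u < T v)%nat -> ~ E u v).

(* Q(G): for i <> j, A_ij <> 0 iff (j,i) in E(G).  Matrices are functions
   nat -> nat -> R, only entries with indices in V = {1..n} matter. *)
Definition in_Q (n : nat) (E : nat -> nat -> Prop) (M : nat -> nat -> R) : Prop :=
  forall i j, inV n i -> inV n j -> i <> j -> (M i j <> 0 <-> E j i).

Definition in_P (n : nat) (C : list (list nat)) (T : nat -> nat)
    (M : nat -> nat -> R) : Prop :=
  exists E, in_graph_class n C T E /\ in_Q n E M.

Fixpoint sum_to (k : nat) (f : nat -> R) : R :=   (* f 1 + ... + f k *)
  match k with O => 0 | S k' => sum_to k' f + f k end.

Definition Amul (n : nat) (M : nat -> nat -> R) (x : nat -> R) (i : nat) : R :=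
  sum_to n (fun j => M i j * x j).

(* B = [e_{j_1}, ..., e_{j_m}] for V_C = [j_1; ...; j_m]; input w indexed 0..m-1 *)
Fixpoint Bmul_aux (js : list nat) (k : nat) (w : nat -> R) (i : nat) : R :=
  match js with
  | [] => 0
  | j :: js' => (if Nat.eqb j i then w k else 0) + Bmul_aux js' (S k) w i
  end.
Definition Bmul (js : list nat) (w : nat -> R) (i : nat) : R := Bmul_aux js 0 w i.

Definition piecewise_continuous (f : R -> R) : Prop :=
  forall a b, a < b ->
  exists (N : nat) (p : nat -> R),
    p 0%nat = a /\ p N = b /\
    forall k, (k < N)%nat ->
      p k < p (S k) /\
      (forall t, p k < t < p (S k) -> continuous f t) /\
      (exists l, filterlim f (at_right (p k)) (locally l)) /\
      (exists l, filterlim f (at_left (p (S k))) (locally l)).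

Definition mat_piecewise_continuous (n : nat) (A : R -> nat -> nat -> R) : Prop :=
  forall i j, inV n i -> inV n j -> piecewise_continuous (fun t => A t i j).

Definition vec_piecewise_continuous (m : nat) (u : R -> nat -> R) : Prop :=
  forall k, (k < m)%nat -> piecewise_continuous (fun t => u t k).

Fixpoint psum (K : nat) (f : nat -> R) : R :=
  match K with O => 0 | S K' => psum K' f + f K' end.

Definition lebesgue_null (N : R -> Prop) : Prop :=
  forall eps, 0 < eps ->
  exists a b : nat -> R,
    (forall k, a k <= b k) /\
    (forall t, N t -> exists k, a k < t < b k) /\
    (forall K, psum K (fun k => b k - a k) <= eps).

Definition almost_everywhere (P : R -> Prop) : Prop :=
  exists N, lebesgue_null N /\ forall t, ~ N t -> P t.

(* x is a (Caratheodory) solution on [t0,t1] of x' = A(t) x + B u(t):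
   x(t) = x(t0) + int_{t0}^t (A(s) x(s) + B u(s)) ds for t in [t0,t1]. *)
Definition ltv_solution (n : nat) (A : R -> nat -> nat -> R) (VC : list nat)
    (u : R -> nat -> R) (x : R -> nat -> R) (t0 t1 : R) : Prop :=
  forall t, t0 <= t <= t1 -> forall i, inV n i ->
    is_RInt (fun s => Amul n (A s) (x s) i + Bmul VC (u s) i) t0 t (x t i - x t0 i).

Definition controllable (n : nat) (A : R -> nat -> nat -> R) (VC : list nat)
    (t0 t1 : R) : Prop :=
  forall x0 xf : nat -> R,
  exists (u : R -> nat -> R) (x : R -> nat -> R),
    vec_piecewise_continuous (length VC) u /\
    ltv_solution n A VC u x t0 t1 /\
    (forall i, inV n i -> x t0 i = x0 i /\ x t1 i = xf i).

(* Necessity: for the constant matrix of the chain edges, a source outside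
   [V_C] has a zero row both in [A] and in [B], so its state cannot move.

   Sufficiency is the Gramian argument. Let [lam] solve the adjoint equation
   [lam' = - A^T lam] with [lam(t1) = eta], and let [x] be driven from [0] by
   the input [B^T lam]; duality gives [<eta, x(t1)> = int |B^T lam|^2]. If the
   Gramian [eta |-> x(t1)] kills [eta], then [lam] vanishes on [V_C], hence on
   every source. The time function propagates this along the chains: for an
   edge [p -> v], [lam_p' = - sum_i A_ip lam_i] reduces to [- A_vp lam_v],
   because the pattern forbids edges from [p] to nodes other than [v] of time
   [>= T v], while the nodes of smaller time already vanish; as [A_vp <> 0]
   almost everywhere, [lam_v = 0]. So the Gramian is invertible, and [B^T lam]
   for a suitable [eta] steers any [x0] to any [xf]. The state and adjoint
   equations are solved by Picard iteration. *)

From Stdlib Require Import Reals Lra Lia List Arith Classical ClassicalEpsilon.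
From Coquelicot Require Import Coquelicot.
From mathcomp Require all_boot all_algebra Rstruct.
Import ListNotations.
Open Scope R_scope.

(** * Finite sums *)

Lemma sum_to_ext n f g :
  (forall k, (1 <= k <= n)%nat -> f k = g k) -> sum_to n f = sum_to n g.
Proof.
  induction n; simpl; intros H; auto.
  rewrite IHn, H; [reflexivity | lia |]. intros; apply H; lia.
Qed.

Lemma sum_to_zero n f : (forall k, (1 <= k <= n)%nat -> f k = 0) -> sum_to n f = 0.
Proof.
  induction n; simpl; intros H; [lra |].
  rewrite IHn, H; [lra | lia |]. intros; apply H; lia.
Qed.

Lemma sum_to_plus n f g : sum_to n (fun k => f k + g k) = sum_to n f + sum_to n g.
Proof. induction n; simpl; [lra |]. rewrite IHn; lra. Qed.

Lemma sum_to_minus n f g : sum_to n (fun k => f k - g k) = sum_to n f - sum_to n g.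
Proof. induction n; simpl; [lra |]. rewrite IHn; lra. Qed.

Lemma sum_to_scal_l n c f : sum_to n (fun k => c * f k) = c * sum_to n f.
Proof. induction n; simpl; [lra |]. rewrite IHn; lra. Qed.

Lemma sum_to_scal_r n c f : sum_to n (fun k => f k * c) = sum_to n f * c.
Proof. induction n; simpl; [lra |]. rewrite IHn; lra. Qed.

Lemma sum_to_const n c : sum_to n (fun _ => c) = INR n * c.
Proof. induction n; simpl sum_to; [simpl; lra |]. rewrite IHn, S_INR; lra. Qed.

Lemma sum_to_swap n m f :
  sum_to n (fun i => sum_to m (fun j => f i j)) = sum_to m (fun j => sum_to n (fun i => f i j)).
Proof.
  induction n; simpl.
  - symmetry; apply sum_to_zero; auto.
  - rewrite IHn, <- sum_to_plus. reflexivity.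
Qed.

Lemma sum_to_le n f g :
  (forall k, (1 <= k <= n)%nat -> f k <= g k) -> sum_to n f <= sum_to n g.
Proof.
  induction n; simpl; intros H; [lra |].
  assert (f (S n) <= g (S n)) by (apply H; lia).
  assert (sum_to n f <= sum_to n g) by (apply IHn; intros; apply H; lia).
  lra.
Qed.

Lemma Rabs_sum_to_le n f : Rabs (sum_to n f) <= sum_to n (fun k => Rabs (f k)).
Proof.
  induction n; simpl; [rewrite Rabs_R0; lra |].
  eapply Rle_trans; [apply Rabs_triang | lra].
Qed.

Lemma sum_to_single n f s :
  (1 <= s <= n)%nat -> (forall k, (1 <= k <= n)%nat -> k <> s -> f k = 0) ->
  sum_to n f = f s.
Proof.
  induction n; intros Hs H; [lia |]. simpl.
  destruct (Nat.eq_dec s (S n)) as [-> | Hne].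
  - rewrite sum_to_zero; [lra |]. intros; apply H; lia.
  - rewrite IHn, (H (S n)); [lra | lia | auto | lia |]. intros; apply H; lia.
Qed.

(** * Real analysis *)

(* Coquelicot states its algebraic lemmas with the generic [plus], [scal], ...
   of an abstract normed module, which do not unify with [Rplus], [Rmult], ...
   on real-valued functions; the [_R] lemmas are their instances at [R]. *)

Lemma continuous_plus_R (f g : R -> R) t :
  continuous f t -> continuous g t -> continuous (fun s => f s + g s) t.
Proof.
  intros; apply (continuous_plus (U := R_UniformSpace) (K := R_AbsRing) (V := R_NormedModule) f g);
    auto.
Qed.

Lemma continuous_minus_R (f g : R -> R) t :
  continuous f t -> continuous g t -> continuous (fun s => f s - g s) t.
Proof.
  intros; apply (continuous_minus (U := R_UniformSpace) (K := R_AbsRing) (V := R_NormedModule) f g);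
    auto.
Qed.

Lemma continuous_mult_R (f g : R -> R) t :
  continuous f t -> continuous g t -> continuous (fun s => f s * g s) t.
Proof. intros; apply (continuous_mult (U := R_UniformSpace) (K := R_AbsRing) f g); auto. Qed.

Lemma continuous_comp_R (f g : R -> R) t :
  continuous f t -> continuous g (f t) -> continuous (fun s => g (f s)) t.
Proof.
  intros; apply (continuous_comp (U := R_UniformSpace) (V := R_UniformSpace) (W := R_UniformSpace) f g);
    auto.
Qed.

Lemma ex_RInt_plus_R (f g : R -> R) a b :
  ex_RInt f a b -> ex_RInt g a b -> ex_RInt (fun t => f t + g t) a b.
Proof. intros; apply (ex_RInt_plus (V := R_CompleteNormedModule) f g); auto. Qed.

Lemma ex_RInt_minus_R (f g : R -> R) a b :
  ex_RInt f a b -> ex_RInt g a b -> ex_RInt (fun t => f t - g t) a b.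
Proof. intros; apply (ex_RInt_minus (V := R_CompleteNormedModule) f g); auto. Qed.

Lemma ex_RInt_scal_R (f : R -> R) a b k : ex_RInt f a b -> ex_RInt (fun t => k * f t) a b.
Proof. intros; apply (ex_RInt_scal (V := R_CompleteNormedModule)); auto. Qed.

Lemma ex_RInt_ext_R (f g : R -> R) a b :
  (forall x, Rmin a b < x < Rmax a b -> f x = g x) -> ex_RInt f a b -> ex_RInt g a b.
Proof. intros; apply (ex_RInt_ext (V := R_CompleteNormedModule) f); auto. Qed.

Lemma ex_RInt_continuous_R (f : R -> R) a b :
  (forall z, Rmin a b <= z <= Rmax a b -> continuous f z) -> ex_RInt f a b.
Proof. intros; apply (ex_RInt_continuous (V := R_CompleteNormedModule)); auto. Qed.

Lemma RInt_correct_R (f : R -> R) a b : ex_RInt f a b -> is_RInt f a b (RInt f a b).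
Proof. intros; apply (RInt_correct (V := R_CompleteNormedModule)); auto. Qed.

Lemma RInt_minus_R (f g : R -> R) a b : ex_RInt f a b -> ex_RInt g a b ->
  RInt (fun t => f t - g t) a b = RInt f a b - RInt g a b.
Proof. intros; apply (RInt_minus (V := R_CompleteNormedModule) f g); auto. Qed.

Lemma RInt_scal_R (f : R -> R) a b k :
  ex_RInt f a b -> RInt (fun t => k * f t) a b = k * RInt f a b.
Proof. intros; apply (RInt_scal (V := R_CompleteNormedModule)); auto. Qed.

Lemma RInt_ext_R (f g : R -> R) a b :
  (forall x, Rmin a b < x < Rmax a b -> f x = g x) -> RInt f a b = RInt g a b.
Proof. intros; apply (RInt_ext (V := R_CompleteNormedModule)); auto. Qed.

Lemma RInt_point_R (f : R -> R) a : RInt f a a = 0.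
Proof. apply (RInt_point (V := R_CompleteNormedModule)). Qed.

Lemma RInt_swap_R (f : R -> R) a b : ex_RInt f a b -> RInt f b a = - RInt f a b.
Proof. intros H. rewrite <- (opp_RInt_swap (V := R_CompleteNormedModule) f a b H). reflexivity. Qed.

Lemma RInt_Chasles_R (f : R -> R) a b c :
  ex_RInt f a b -> ex_RInt f b c -> RInt f a b + RInt f b c = RInt f a c.
Proof. intros; apply (RInt_Chasles (V := R_CompleteNormedModule) f); auto. Qed.

Lemma is_RInt_unique_R (f : R -> R) a b l : is_RInt f a b l -> RInt f a b = l.
Proof. intros; apply (is_RInt_unique (V := R_CompleteNormedModule)); auto. Qed.

Lemma is_RInt_ext_R (f g : R -> R) a b l :
  (forall x, f x = g x) -> is_RInt f a b l -> is_RInt g a b l.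
Proof. intros H; apply (is_RInt_ext (V := R_NormedModule) f g). intros; auto. Qed.

Lemma is_RInt_plus_R (f g : R -> R) a b lf lg :
  is_RInt f a b lf -> is_RInt g a b lg -> is_RInt (fun t => f t + g t) a b (lf + lg).
Proof. intros; apply (is_RInt_plus (V := R_NormedModule) f g); auto. Qed.

Lemma is_RInt_scal_R (f : R -> R) a b k l :
  is_RInt f a b l -> is_RInt (fun t => k * f t) a b (k * l).
Proof. intros; apply (is_RInt_scal (V := R_NormedModule) f a b k l); auto. Qed.

Lemma is_RInt_const_R a b c : is_RInt (fun _ => c) a b ((b - a) * c).
Proof. exact (@is_RInt_const R_NormedModule a b c). Qed.

Lemma is_derive_plus_R (f g : R -> R) t df dg :
  is_derive f t df -> is_derive g t dg -> is_derive (fun s => f s + g s) t (df + dg).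
Proof. intros; apply (is_derive_plus (K := R_AbsRing) (V := R_NormedModule) f g); auto. Qed.

Lemma is_derive_minus_R (f g : R -> R) t df dg :
  is_derive f t df -> is_derive g t dg -> is_derive (fun s => f s - g s) t (df - dg).
Proof. intros; apply (is_derive_minus (K := R_AbsRing) (V := R_NormedModule) f g); auto. Qed.

Lemma is_derive_mult_R (f g : R -> R) t df dg : is_derive f t df -> is_derive g t dg ->
  is_derive (fun s => f s * g s) t (df * g t + f t * dg).
Proof. intros; apply (is_derive_mult (K := R_AbsRing) f g); auto. intros; apply Rmult_comm. Qed.

Lemma ex_derive_continuous_R (f : R -> R) t : ex_derive f t -> continuous f t.
Proof. apply (ex_derive_continuous (K := R_AbsRing) (V := R_NormedModule)). Qed.

Lemma locally_R x (P : R -> Prop) :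
  locally x P <-> exists d, 0 < d /\ forall y, Rabs (y - x) < d -> P y.
Proof.
  split.
  - intros [e He]. exists e. split; [apply cond_pos |]. intros y Hy. apply He. exact Hy.
  - intros [d [Hd H]]. exists (mkposreal d Hd). intros y Hy. apply H. exact Hy.
Qed.

Lemma continuous_eps_delta g x : continuous g x <->
  forall eps, 0 < eps -> exists d, 0 < d /\ forall y, Rabs (y - x) < d -> Rabs (g y - g x) < eps.
Proof.
  unfold continuous. rewrite filterlim_locally. split.
  - intros H eps He. destruct (proj1 (locally_R _ _) (H (mkposreal eps He))) as [d Hd].
    exists d. exact Hd.
  - intros H eps. apply locally_R. apply (H eps (cond_pos eps)).
Qed.

Lemma at_right_limit_eps f x l : filterlim f (at_right x) (locally l) ->
  forall eps, 0 < eps -> exists d, 0 < d /\ forall y, Rabs (y - x) < d -> x < y -> Rabs (f y - l) < eps.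
Proof.
  rewrite filterlim_locally. intros H eps He.
  apply (proj1 (locally_R _ _) (H (mkposreal eps He))).
Qed.

Lemma at_left_limit_eps f x l : filterlim f (at_left x) (locally l) ->
  forall eps, 0 < eps -> exists d, 0 < d /\ forall y, Rabs (y - x) < d -> y < x -> Rabs (f y - l) < eps.
Proof.
  rewrite filterlim_locally. intros H eps He.
  apply (proj1 (locally_R _ _) (H (mkposreal eps He))).
Qed.

Lemma continuous_ext_near (f g : R -> R) x d : 0 < d ->
  (forall y, Rabs (y - x) < d -> f y = g y) -> continuous f x -> continuous g x.
Proof.
  intros Hd H. apply (continuous_ext_loc (T := R_UniformSpace) (U := R_UniformSpace) g f).
  apply locally_R. eauto.
Qed.

Lemma continuous_lipschitz f K x :
  (forall s, Rabs (f s - f x) <= K * Rabs (s - x)) -> continuous f x.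
Proof.
  intros H. apply continuous_eps_delta. intros eps He.
  assert (HK : 0 < Rabs K + 1) by (pose proof (Rabs_pos K); lra).
  exists (eps / (Rabs K + 1)). split; [apply Rdiv_lt_0_compat; lra |].
  intros y Hy. apply (Rmult_lt_compat_l (Rabs K + 1)) in Hy; [| lra].
  replace ((Rabs K + 1) * (eps / (Rabs K + 1))) with eps in Hy by (field; lra).
  eapply Rle_lt_trans; [apply H |].
  pose proof (Rle_abs K). pose proof (Rabs_pos (y - x)). nra.
Qed.

Lemma continuous_const_minus c t : continuous (fun s => c - s) t.
Proof.
  apply (continuous_lipschitz _ 1). intros s.
  replace (c - s - (c - t)) with (- (s - t)) by ring. rewrite Rabs_Ropp; lra.
Qed.

Lemma continuous_bounded_on g c d : c <= d -> (forall t, c <= t <= d -> continuous g t) ->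
  exists M, forall t, c <= t <= d -> Rabs (g t) <= M.
Proof.
  intros Hcd H.
  destruct (continuity_ab_maj (fun t => Rabs (g t)) c d Hcd) as [m [Hm _]].
  - intros t Ht. apply continuity_pt_filterlim, (continuous_comp g Rabs); auto.
    apply continuous_Rabs.
  - exists (Rabs (g m)). auto.
Qed.

Lemma ex_RInt_subinterval (f : R -> R) a b u v :
  ex_RInt f a b -> a <= u <= b -> a <= v <= b -> ex_RInt f u v.
Proof.
  intros H Hu Hv.
  assert (G : forall u v, a <= u <= v -> v <= b -> ex_RInt f u v).
  { intros u' v' H1 H2.
    apply (ex_RInt_Chasles_2 (V := R_CompleteNormedModule) f a u' v'); [lra |].
    apply (ex_RInt_Chasles_1 (V := R_CompleteNormedModule) f a v' b); [lra | auto]. }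
  destruct (Rle_dec u v); [apply G; lra |].
  apply (ex_RInt_swap (V := R_CompleteNormedModule)). apply G; lra.
Qed.

Lemma Rabs_RInt_le (f h : R -> R) a b : a <= b -> ex_RInt f a b -> ex_RInt h a b ->
  (forall x, a < x < b -> Rabs (f x) <= h x) -> Rabs (RInt f a b) <= RInt h a b.
Proof.
  intros Hab Hf Hh H. apply Rabs_le. split.
  - assert (Hlow : RInt (fun t => -1 * h t) a b <= RInt f a b).
    { apply RInt_le; auto; [apply ex_RInt_scal_R; auto |].
      intros x Hx. specialize (H x Hx). apply Rabs_le_between in H. lra. }
    rewrite RInt_scal_R in Hlow by auto. lra.
  - apply RInt_le; auto. intros x Hx. specialize (H x Hx). apply Rabs_le_between in H. lra.
Qed.

Lemma RInt_lipschitz (F : R -> R) a b M u v : ex_RInt F a b ->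
  (forall t, a <= t <= b -> Rabs (F t) <= M) -> a <= u <= b -> a <= v <= b ->
  Rabs (RInt F a v - RInt F a u) <= M * Rabs (v - u).
Proof.
  intros HF HM Hu Hv.
  assert (Hsub : forall x y, a <= x <= b -> a <= y <= b -> ex_RInt F x y)
    by (intros; apply (ex_RInt_subinterval F a b); auto).
  assert (Ha : a <= a <= b) by lra.
  rewrite <- (RInt_Chasles_R F a u v (Hsub a u Ha Hu) (Hsub u v Hu Hv)).
  unfold Rminus at 1. rewrite Rplus_comm, <- Rplus_assoc, Rplus_opp_l, Rplus_0_l.
  destruct (Rle_dec u v).
  - rewrite (Rabs_right (v - u)), Rmult_comm by lra.
    apply abs_RInt_le_const; auto. intros; apply HM; lra.
  - rewrite (RInt_swap_R F v u (Hsub v u Hv Hu)), Rabs_Ropp, (Rabs_left (v - u)) by lra.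
    replace (- (v - u)) with (u - v) by ring. rewrite Rmult_comm.
    apply abs_RInt_le_const; [lra | auto |]. intros; apply HM; lra.
Qed.

Lemma is_RInt_sum_to n (f : nat -> R -> R) (l : nat -> R) a b :
  (forall k, (1 <= k <= n)%nat -> is_RInt (f k) a b (l k)) ->
  is_RInt (fun s => sum_to n (fun k => f k s)) a b (sum_to n l).
Proof.
  induction n; simpl; intros H.
  - pose proof (is_RInt_const_R a b 0) as H0. rewrite Rmult_0_r in H0. exact H0.
  - apply (is_RInt_plus_R (fun s => sum_to n (fun k => f k s)) (f (S n)));
      [apply IHn; intros |]; apply H; lia.
Qed.

Lemma ex_RInt_sum_to n (f : nat -> R -> R) a b :
  (forall k, (1 <= k <= n)%nat -> ex_RInt (f k) a b) ->
  ex_RInt (fun s => sum_to n (fun k => f k s)) a b.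
Proof.
  intros H. exists (sum_to n (fun k => RInt (f k) a b)).
  apply is_RInt_sum_to. intros; apply RInt_correct_R; auto.
Qed.

Lemma continuous_sum_to n (f : nat -> R -> R) t :
  (forall k, (1 <= k <= n)%nat -> continuous (f k) t) ->
  continuous (fun s => sum_to n (fun k => f k s)) t.
Proof.
  induction n; simpl; intros H; [apply continuous_const |].
  apply (continuous_plus_R (fun s => sum_to n (fun k => f k s)) (f (S n)));
    [apply IHn; intros |]; apply H; lia.
Qed.

Lemma is_derive_sum_to n (f df : nat -> R -> R) t :
  (forall k, (1 <= k <= n)%nat -> is_derive (f k) t (df k t)) ->
  is_derive (fun s => sum_to n (fun k => f k s)) t (sum_to n (fun k => df k t)).
Proof.
  induction n; simpl; intros H; [auto_derive; auto |].
  apply (is_derive_plus_R (fun s => sum_to n (fun k => f k s)) (f (S n)));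
    [apply IHn; intros |]; apply H; lia.
Qed.

Lemma continuous_nonneg_RInt_zero (g : R -> R) a b : a < b -> (forall t, continuous g t) ->
  (forall t, 0 <= g t) -> RInt g a b = 0 -> forall t, a <= t <= b -> g t = 0.
Proof.
  intros Hab Hc Hp HI t Ht. apply NNPP. intros Hne.
  assert (Hgt : 0 < g t) by (destruct (Hp t); auto; congruence).
  destruct (proj1 (continuous_eps_delta g t) (Hc t) (g t / 2) ltac:(lra)) as [d [Hd Hdd]].
  set (c := Rmax a (t - d / 2)). set (e := Rmin b (t + d / 2)).
  assert (Hc1 : a <= c /\ t - d / 2 <= c /\ c <= t) by (unfold c, Rmax; destruct Rle_dec; lra).
  assert (He1 : e <= b /\ e <= t + d / 2 /\ t <= e) by (unfold e, Rmin; destruct Rle_dec; lra).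
  assert (Hce : c < e) by (unfold c, e, Rmax, Rmin in *; repeat destruct Rle_dec; lra).
  assert (Hex : forall u v, ex_RInt g u v) by (intros; apply ex_RInt_continuous_R; auto).
  rewrite <- (RInt_Chasles_R g a c b), <- (RInt_Chasles_R g c e b) in HI by auto.
  assert (P1 : 0 <= RInt g a c) by (apply RInt_ge_0; auto; lra).
  assert (P3 : 0 <= RInt g e b) by (apply RInt_ge_0; auto; lra).
  assert (P2 : (e - c) * (g t / 2) <= RInt g c e).
  { rewrite <- (is_RInt_unique _ _ _ _ (is_RInt_const_R c e (g t / 2))).
    apply RInt_le; [lra | apply ex_RInt_continuous_R; intros; apply continuous_const | auto |].
    intros x Hx. assert (Rabs (x - t) < d) by (apply Rabs_def1; lra).
    specialize (Hdd x H). apply Rabs_def2 in Hdd. lra. }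
  assert (0 < (e - c) * (g t / 2)) by (apply Rmult_lt_0_compat; lra). lra.
Qed.

(** * Piecewise continuity on a compact interval *)

Definition piecewise_continuous_on (a b : R) (f : R -> R) : Prop :=
  exists (N : nat) (p : nat -> R), p O = a /\ p N = b /\
   forall k, (k < N)%nat -> p k < p (S k) /\
     exists g : R -> R, (forall t, p k <= t <= p (S k) -> continuous g t) /\
                        (forall t, p k < t < p (S k) -> f t = g t).

Lemma continuous_of_one_sided g x :
  (forall eps, 0 < eps -> exists d, 0 < d /\
     forall y, Rabs (y - x) < d -> y < x -> Rabs (g y - g x) < eps) ->
  (forall eps, 0 < eps -> exists d, 0 < d /\
     forall y, Rabs (y - x) < d -> x < y -> Rabs (g y - g x) < eps) ->
  continuous g x.
Proof.
  intros Hl Hr. apply continuous_eps_delta. intros eps He.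
  destruct (Hl eps He) as [d1 [Hd1 H1]], (Hr eps He) as [d2 [Hd2 H2]].
  exists (Rmin d1 d2). split; [apply Rmin_pos; auto |]. intros y Hy.
  pose proof (Rmin_l d1 d2). pose proof (Rmin_r d1 d2).
  destruct (Rtotal_order y x) as [Hyx | [-> | Hyx]].
  - apply H1; auto; lra.
  - rewrite Rminus_diag, Rabs_R0; auto.
  - apply H2; auto; lra.
Qed.

Lemma near_interior c d t : c < t < d ->
  exists e, 0 < e /\ forall s, Rabs (s - t) < e -> c < s < d.
Proof.
  intros Ht. exists (Rmin (t - c) (d - t)). split; [apply Rmin_pos; lra |].
  intros s Hs. pose proof (Rmin_l (t - c) (d - t)). pose proof (Rmin_r (t - c) (d - t)).
  apply Rabs_lt_between in Hs. lra.
Qed.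

Lemma continuous_extension_of_piece f c d l1 l2 : c < d ->
  (forall t, c < t < d -> continuous f t) ->
  filterlim f (at_right c) (locally l1) -> filterlim f (at_left d) (locally l2) ->
  exists g : R -> R, (forall t, c <= t <= d -> continuous g t) /\
                     (forall t, c < t < d -> f t = g t).
Proof.
  intros Hcd Hc Hl1 Hl2.
  set (g := fun t => if Rle_dec t c then l1 else if Rle_dec d t then l2 else f t).
  assert (Hg : forall t, c < t < d -> f t = g t).
  { intros t Ht. unfold g. destruct Rle_dec; [lra |]. destruct Rle_dec; [lra | auto]. }
  assert (Hgc : g c = l1) by (unfold g; destruct Rle_dec; lra).
  assert (Hgd : g d = l2) by (unfold g; do 2 (destruct Rle_dec; try lra)).
  exists g. split; [| exact Hg]. intros t Ht.
  destruct (Req_dec t c) as [-> | Htc]; [| destruct (Req_dec t d) as [-> | Htd]].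
  - apply continuous_of_one_sided.
    + intros eps He. exists 1. split; [lra |]. intros y _ Hy.
      unfold g at 1. destruct Rle_dec; [| lra]. rewrite Hgc, Rminus_diag, Rabs_R0; auto.
    + intros eps He. destruct (at_right_limit_eps f c l1 Hl1 eps He) as [e [He' H]].
      exists (Rmin e (d - c)). split; [apply Rmin_pos; lra |]. intros y Hy Hcy.
      pose proof (Rmin_l e (d - c)). pose proof (Rmin_r e (d - c)).
      assert (Hy' := Hy). apply Rabs_lt_between in Hy'.
      rewrite <- Hg, Hgc by lra. apply H; lra.
  - apply continuous_of_one_sided.
    + intros eps He. destruct (at_left_limit_eps f d l2 Hl2 eps He) as [e [He' H]].
      exists (Rmin e (d - c)). split; [apply Rmin_pos; lra |]. intros y Hy Hyd.
      pose proof (Rmin_l e (d - c)). pose proof (Rmin_r e (d - c)).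
      assert (Hy' := Hy). apply Rabs_lt_between in Hy'.
      rewrite <- Hg, Hgd by lra. apply H; lra.
    + intros eps He. exists 1. split; [lra |]. intros y _ Hy.
      unfold g at 1. do 2 (destruct Rle_dec; try lra). rewrite Hgd, Rminus_diag, Rabs_R0; auto.
  - destruct (near_interior c d t) as [e [He Hnear]]; [lra |].
    apply (continuous_ext_near f g t e He); [intros; apply Hg, Hnear; auto |].
    apply Hc; lra.
Qed.

Lemma piecewise_continuous_on_of a b f : a < b -> piecewise_continuous f ->
  piecewise_continuous_on a b f.
Proof.
  intros Hab Hpc. destruct (Hpc a b Hab) as (N & p & H0 & HN & H).
  exists N, p. repeat split; auto; [apply H; auto |].
  destruct (H k H1) as [Hlt [Hc [[l1 Hl1] [l2 Hl2]]]].
  apply (continuous_extension_of_piece f _ _ l1 l2); auto.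
Qed.

Lemma piecewise_continuous_of_continuous (f : R -> R) :
  (forall t, continuous f t) -> piecewise_continuous f.
Proof.
  intros Hf a b Hab. exists 1%nat, (fun k => match k with O => a | _ => b end).
  split; [reflexivity |]. split; [reflexivity |].
  intros k Hk. replace k with O by lia. simpl.
  split; [auto |]. split; [intros; auto |]. split.
  - exists (f a). apply (filterlim_filter_le_1 (F := locally a)), Hf.
    apply filter_le_within.
  - exists (f b). apply (filterlim_filter_le_1 (F := locally b)), Hf.
    apply filter_le_within.
Qed.

Lemma partition_mono N (p : nat -> R) : (forall k, (k < N)%nat -> p k < p (S k)) ->
  forall i j, (i <= j <= N)%nat -> p i <= p j.
Proof.
  intros H i j Hij. induction j; [replace i with O by lia; lra |].
  destruct (Nat.eq_dec i (S j)) as [-> | Hne]; [lra |].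
  assert (p i <= p j) by (apply IHj; lia). assert (p j < p (S j)) by (apply H; lia). lra.
Qed.

Lemma piecewise_continuous_on_ex_RInt a b f :
  piecewise_continuous_on a b f -> ex_RInt f a b.
Proof.
  intros (N & p & <- & <- & H).
  assert (Hm : forall m, (m <= N)%nat -> ex_RInt f (p O) (p m)); [| auto].
  induction m; intros Hm.
  - exists 0. apply (is_RInt_point (V := R_NormedModule)).
  - apply (ex_RInt_Chasles f _ (p m)); [apply IHm; lia |].
    destruct (H m) as [Hlt [g [Hg1 Hg2]]]; [lia |].
    apply (ex_RInt_ext_R g).
    + rewrite Rmin_left, Rmax_right by lra. intros; symmetry; auto.
    + apply ex_RInt_continuous_R. rewrite Rmin_left, Rmax_right by lra. auto.
Qed.

Lemma piecewise_continuous_on_bounded a b f : piecewise_continuous_on a b f ->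
  exists M, forall t, a <= t <= b -> Rabs (f t) <= M.
Proof.
  intros (N & p & <- & <- & H).
  assert (Hmono : forall k, (k < N)%nat -> p k < p (S k)) by (intros; apply H; auto).
  assert (Hm : forall m, (m <= N)%nat -> exists M, forall t, p O <= t <= p m -> Rabs (f t) <= M);
    [| auto].
  induction m; intros Hm.
  - exists (Rabs (f (p O))). intros t Ht. replace t with (p O) by lra. lra.
  - destruct IHm as [M HM]; [lia |].
    destruct (H m) as [Hlt [g [Hg1 Hg2]]]; [lia |].
    destruct (continuous_bounded_on g (p m) (p (S m)) ltac:(lra) Hg1) as [Mg HMg].
    assert (p O <= p m) by (apply (partition_mono N); auto; lia).
    exists (Rmax M (Rmax Mg (Rabs (f (p (S m)))))). intros t Ht.
    pose proof (Rmax_l M (Rmax Mg (Rabs (f (p (S m)))))).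
    pose proof (Rmax_r M (Rmax Mg (Rabs (f (p (S m)))))).
    pose proof (Rmax_l Mg (Rabs (f (p (S m))))). pose proof (Rmax_r Mg (Rabs (f (p (S m))))).
    destruct (Rle_dec t (p m)); [specialize (HM t ltac:(lra)); lra |].
    destruct (Req_dec t (p (S m))) as [-> | Hne]; [lra |].
    rewrite Hg2 by lra. specialize (HMg t ltac:(lra)). lra.
Qed.

Lemma piecewise_continuous_on_continuous_off a b f : piecewise_continuous_on a b f ->
  exists L : list R, forall t, a < t < b -> ~ In t L -> continuous f t.
Proof.
  intros (N & p & <- & <- & H).
  exists (map p (seq 0 (S N))). intros t Ht HL.
  assert (Hnp : forall k, (k <= N)%nat -> t <> p k).
  { intros k Hk ->. apply HL, in_map, in_seq. lia. }
  assert (Hcov : forall m, (m <= N)%nat -> p O < t < p m ->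
            exists k, (k < m)%nat /\ p k < t < p (S k)).
  { induction m; intros Hm Ht'; [lra |].
    destruct (Rlt_dec t (p m)).
    - destruct IHm as [k Hk]; [lia | lra |]. exists k; split; [lia | tauto].
    - exists m. split; [lia |]. assert (t <> p m) by (apply Hnp; lia). lra. }
  destruct (Hcov N) as [k [Hk Hkt]]; [lia | lra |].
  destruct (H k Hk) as [Hlt [g [Hg1 Hg2]]].
  destruct (near_interior (p k) (p (S k)) t Hkt) as [e [He Hnear]].
  apply (continuous_ext_near g f t e He); [intros; symmetry; apply Hg2, Hnear; auto |].
  apply Hg1; lra.
Qed.

Lemma piecewise_continuous_on_mult a b f h : piecewise_continuous_on a b f ->
  (forall t, continuous h t) -> piecewise_continuous_on a b (fun t => f t * h t).
Proof.
  intros (N & p & H0 & HN & H) Hh. exists N, p. repeat split; auto; [apply H; auto |].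
  destruct (H k H1) as [Hlt [g [Hg1 Hg2]]]. exists (fun t => g t * h t). split.
  - intros t Ht. apply continuous_mult_R; auto.
  - intros t Ht. rewrite Hg2; auto.
Qed.

Lemma piecewise_continuous_on_reflect a b f : piecewise_continuous_on a b f ->
  piecewise_continuous_on a b (fun t => f (a + b - t)).
Proof.
  intros (N & p & H0 & HN & H).
  exists N, (fun k => a + b - p (N - k)%nat). repeat split.
  - rewrite Nat.sub_0_r, HN. ring.
  - rewrite Nat.sub_diag, H0. ring.
  - destruct (H (N - S k)%nat) as [Hlt _]; [lia |].
    replace (S (N - S k)) with (N - k)%nat in Hlt by lia. lra.
  - destruct (H (N - S k)%nat) as [Hlt [g [Hg1 Hg2]]]; [lia |].
    replace (S (N - S k)) with (N - k)%nat in * by lia.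
    exists (fun t => g (a + b - t)). split.
    + intros t Ht. apply continuous_comp_R; [apply continuous_const_minus |].
      apply Hg1. lra.
    + intros t Ht. apply Hg2. lra.
Qed.

(** * Linear integral equations *)

Lemma finite_bound (P : nat -> R -> Prop) n :
  (forall k, (1 <= k <= n)%nat -> exists M, P k M) ->
  (forall k M M', P k M -> M <= M' -> P k M') ->
  exists M, 0 <= M /\ forall k, (1 <= k <= n)%nat -> P k M.
Proof.
  intros H Hm. induction n; [exists 0; split; [lra | intros; lia] |].
  destruct IHn as [M [HM0 HM]]; [intros; apply H; lia |].
  destruct (H (S n)) as [M' HM']; [lia |].
  exists (Rmax M M'). split; [eapply Rle_trans; [apply HM0 | apply Rmax_l] |].
  intros k Hk. destruct (Nat.eq_dec k (S n)) as [-> | Hne].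
  - eapply Hm; [apply HM' | apply Rmax_r].
  - eapply Hm; [apply HM; lia | apply Rmax_l].
Qed.

Lemma zero_of_geometric_bound x C : (forall k, Rabs x <= C * (/2) ^ k) -> x = 0.
Proof.
  intros H. destruct (Req_dec x 0) as [| Hx]; auto. exfalso.
  assert (Hpos := Rabs_pos_lt x Hx).
  assert (HC : 0 < C) by (specialize (H O); simpl in H; lra).
  destruct (pow_lt_1_zero (/2) ltac:(rewrite Rabs_right; lra) (Rabs x / C)) as [N HN].
  { apply Rdiv_lt_0_compat; auto. }
  specialize (HN N (le_n N)). specialize (H N).
  rewrite Rabs_right in HN by (apply Rle_ge, pow_le; lra).
  apply (Rmult_lt_compat_l C) in HN; auto.
  replace (C * (Rabs x / C)) with (Rabs x) in HN by (field; lra). lra.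
Qed.

Lemma geometric_small eps C : 0 < eps -> 0 <= C -> exists k, C * (/2) ^ k < eps.
Proof.
  intros He HC.
  destruct (pow_lt_1_zero (/2) ltac:(rewrite Rabs_right; lra) (eps / (C + 1))) as [N HN].
  { apply Rdiv_lt_0_compat; lra. }
  exists N. specialize (HN N (le_n N)).
  rewrite Rabs_right in HN by (apply Rle_ge, pow_le; lra).
  apply (Rmult_lt_compat_l (C + 1)) in HN; [| lra].
  replace ((C + 1) * (eps / (C + 1))) with eps in HN by (field; lra).
  pose proof (pow_le (/2) N ltac:(lra)). nra.
Qed.

Lemma geometric_increments (u : nat -> R) C :
  (forall k, Rabs (u (S k) - u k) <= C * (/2) ^ k) ->
  forall k m, (k <= m)%nat -> Rabs (u m - u k) <= 2 * C * (/2) ^ k.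
Proof.
  intros H k m Hkm. replace m with (k + (m - k))%nat by lia.
  assert (HC : 0 <= C) by (specialize (H O); pose proof (Rabs_pos (u 1%nat - u O)); simpl in H; lra).
  assert (Hsum : forall p, Rabs (u (k + p)%nat - u k) <= 2 * C * ((/2) ^ k - (/2) ^ (k + p))).
  { induction p.
    - rewrite Nat.add_0_r, !Rminus_diag, Rabs_R0. lra.
    - rewrite Nat.add_succ_r.
      replace (u (S (k + p)) - u k) with ((u (S (k + p)) - u (k + p)%nat) + (u (k + p)%nat - u k))
        by ring.
      eapply Rle_trans; [apply Rabs_triang |].
      pose proof (H (k + p)%nat). simpl pow. lra. }
  eapply Rle_trans; [apply Hsum |].
  pose proof (pow_lt (/2) (k + (m - k)) ltac:(lra)). nra.
Qed.

Lemma geometric_Lim_seq (u : nat -> R) C :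
  (forall k, Rabs (u (S k) - u k) <= C * (/2) ^ k) ->
  forall k, Rabs (real (Lim_seq u) - u k) <= 2 * C * (/2) ^ k.
Proof.
  intros H k. pose proof (geometric_increments u C H) as Hinc.
  assert (HC : 0 <= C) by (specialize (H O); pose proof (Rabs_pos (u 1%nat - u O)); simpl in H; lra).
  assert (Hex : ex_finite_lim_seq u).
  { apply ex_lim_seq_cauchy_corr. intros eps.
    destruct (geometric_small eps (4 * C)) as [N HN]; [apply cond_pos | lra |].
    exists N. intros p m Hp Hm.
    replace (u p - u m) with ((u p - u N) - (u m - u N)) by ring.
    eapply Rle_lt_trans; [apply Rabs_triang |]. rewrite Rabs_Ropp.
    pose proof (Hinc N p Hp). pose proof (Hinc N m Hm). lra. }
  destruct Hex as [l Hl]. rewrite (is_lim_seq_unique _ _ Hl). simpl.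
  apply Rnot_lt_le. intros Hlt. apply is_lim_seq_spec in Hl.
  destruct (Hl (mkposreal (Rabs (l - u k) - 2 * C * (/2) ^ k) ltac:(lra))) as [N HN]. simpl in HN.
  specialize (HN (Nat.max N k) (Nat.le_max_l _ _)).
  pose proof (Hinc k (Nat.max N k) (Nat.le_max_r _ _)).
  pose proof (Rabs_triang (l - u (Nat.max N k)) (u (Nat.max N k) - u k)).
  rewrite (Rabs_minus_sym l (u (Nat.max N k))) in H1.
  replace (l - u (Nat.max N k) + (u (Nat.max N k) - u k)) with (l - u k) in H1 by ring. lra.
Qed.

Lemma continuous_geometric_limit (g : nat -> R -> R) h C t : 0 <= C ->
  (forall k, continuous (g k) t) -> (forall k s, Rabs (h s - g k s) <= C * (/2) ^ k) ->
  continuous h t.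
Proof.
  intros HC Hg Hh. apply continuous_eps_delta. intros eps He.
  destruct (geometric_small (eps / 3) C) as [k Hk]; [lra | auto |].
  destruct (proj1 (continuous_eps_delta _ t) (Hg k) (eps / 3) ltac:(lra)) as [d [Hd Hdd]].
  exists d. split; auto. intros s Hs. specialize (Hdd s Hs).
  pose proof (Hh k s). pose proof (Hh k t). rewrite Rabs_minus_sym in H0.
  replace (h s - h t) with ((h s - g k s) + (g k s - g k t) + (g k t - h t)) by ring.
  pose proof (Rabs_triang ((h s - g k s) + (g k s - g k t)) (g k t - h t)).
  pose proof (Rabs_triang (h s - g k s) (g k s - g k t)). lra.
Qed.

Lemma RInt_exp_affine L a t : 0 < L ->
  RInt (fun s => exp (2 * L * (s - a))) a t = (exp (2 * L * (t - a)) - 1) / (2 * L).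
Proof.
  intros HL. apply is_RInt_unique.
  assert (E : (exp (2 * L * (t - a)) - 1) / (2 * L) =
              minus (exp (2 * L * (t - a)) / (2 * L)) (exp (2 * L * (a - a)) / (2 * L))).
  { unfold minus, plus, opp; simpl. rewrite Rminus_diag, Rmult_0_r, exp_0. field. lra. }
  rewrite E.
  apply (is_RInt_derive (V := R_CompleteNormedModule) (fun s => exp (2 * L * (s - a)) / (2 * L))
           (fun s => exp (2 * L * (s - a)))).
  - intros x _. auto_derive; auto. unfold Rminus. field. lra.
  - intros x _. apply ex_derive_continuous_R. auto_derive. auto.
Qed.

Definition clamp a b t := Rmax a (Rmin b t).

Lemma clamp_in a b t : a <= b -> a <= clamp a b t <= b.
Proof. intros; unfold clamp, Rmax, Rmin; repeat destruct Rle_dec; lra. Qed.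

Lemma clamp_id a b t : a <= t <= b -> clamp a b t = t.
Proof. intros; unfold clamp, Rmax, Rmin; repeat destruct Rle_dec; lra. Qed.

Lemma clamp_lipschitz a b s t : a <= b -> Rabs (clamp a b s - clamp a b t) <= Rabs (s - t).
Proof.
  intros; unfold clamp, Rmax, Rmin; repeat destruct Rle_dec;
    unfold Rabs; repeat destruct Rcase_abs; lra.
Qed.

Definition ltv_rhs n (K : R -> nat -> nat -> R) (f y : R -> nat -> R) i s :=
  sum_to n (fun j => K s i j * y s j) + f s i.

Lemma ltv_rhs_ex_RInt n a b K f y : a < b ->
  (forall i j, inV n i -> inV n j -> piecewise_continuous_on a b (fun t => K t i j)) ->
  (forall i, inV n i -> forall t, continuous (fun s => f s i) t) ->
  (forall j, inV n j -> forall t, continuous (fun s => y s j) t) ->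
  forall i, inV n i -> ex_RInt (ltv_rhs n K f y i) a b.
Proof.
  intros Hab HK Hf Hy i Hi. apply ex_RInt_plus_R.
  - apply (ex_RInt_sum_to n (fun j s => K s i j * y s j)). intros j Hj.
    apply piecewise_continuous_on_ex_RInt,
      (piecewise_continuous_on_mult a b (fun t => K t i j) (fun s => y s j)); auto.
  - apply ex_RInt_continuous_R. intros; apply Hf; auto.
Qed.

Lemma ltv_rhs_bound n K f y i s MK My Mf : 0 <= MK ->
  (forall j, inV n j -> Rabs (K s i j) <= MK) -> (forall j, inV n j -> Rabs (y s j) <= My) ->
  Rabs (f s i) <= Mf -> Rabs (ltv_rhs n K f y i s) <= INR n * MK * My + Mf.
Proof.
  intros HMK HK Hy Hf. unfold ltv_rhs.
  eapply Rle_trans; [apply Rabs_triang | apply Rplus_le_compat; auto].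
  eapply Rle_trans; [apply Rabs_sum_to_le |].
  rewrite Rmult_assoc, <- sum_to_const. apply sum_to_le. intros j Hj.
  rewrite Rabs_mult. apply Rmult_le_compat; auto using Rabs_pos.
Qed.

Lemma ltv_rhs_minus n K f y1 y0 i s :
  ltv_rhs n K f y1 i s - ltv_rhs n K f y0 i s = sum_to n (fun j => K s i j * (y1 s j - y0 s j)).
Proof.
  unfold ltv_rhs.
  rewrite (sum_to_ext n (fun j => K s i j * (y1 s j - y0 s j))
             (fun j => K s i j * y1 s j - K s i j * y0 s j)) by (intros; ring).
  rewrite sum_to_minus. ring.
Qed.

Lemma Rabs_ltv_rhs_minus_le n K f y1 y0 i s MK E : 0 <= MK ->
  (forall j, inV n j -> Rabs (K s i j) <= MK) -> (forall j, inV n j -> Rabs (y1 s j - y0 s j) <= E) ->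
  Rabs (ltv_rhs n K f y1 i s - ltv_rhs n K f y0 i s) <= INR n * MK * E.
Proof.
  intros HMK HK Hy. rewrite ltv_rhs_minus.
  pose proof (ltv_rhs_bound n K (fun _ _ => 0) (fun s j => y1 s j - y0 s j) i s MK E 0 HMK HK Hy).
  unfold ltv_rhs in H. rewrite Rplus_0_r, Rabs_R0, Rplus_0_r in H. apply H. lra.
Qed.

(* Each iterate is evaluated at [clamp a b t], i.e. extended by constants
   outside [a, b], so that all iterates are continuous on the whole line. *)
Fixpoint picard n a b K f (c : nat -> R) (k : nat) : R -> nat -> R :=
  match k with
  | O => fun _ i => c i
  | S k' => fun t i => c i + RInt (ltv_rhs n K f (picard n a b K f c k') i) a (clamp a b t)
  end.

Section Picard.

Variables (n : nat) (a b : R) (K : R -> nat -> nat -> R) (f : R -> nat -> R) (c : nat -> R).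
Hypothesis Hab : a < b.
Hypothesis HK : forall i j, inV n i -> inV n j -> piecewise_continuous_on a b (fun t => K t i j).
Hypothesis Hf : forall i, inV n i -> forall t, continuous (fun s => f s i) t.
Variable MK : R.
Hypothesis HMK0 : 0 <= MK.
Hypothesis HMK : forall i j t, inV n i -> inV n j -> a <= t <= b -> Rabs (K t i j) <= MK.

Local Notation P := (picard n a b K f c).

Lemma picard_at_clamp k t i : P k t i = P k (clamp a b t) i.
Proof.
  destruct k as [| k]; [reflexivity |]. simpl.
  rewrite (clamp_id a b (clamp a b t)); auto. apply clamp_in; lra.
Qed.

Lemma picard_at_a k i : P k a i = c i.
Proof. destruct k; simpl; [reflexivity |]. rewrite clamp_id, RInt_point_R by lra. ring. Qed.

Lemma picard_succ k t i : a <= t <= b -> P (S k) t i - c i = RInt (ltv_rhs n K f (P k) i) a t.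
Proof. intros Ht. simpl. rewrite clamp_id by lra. ring. Qed.

Lemma picard_continuous k i : inV n i -> forall t, continuous (fun s => P k s i) t.
Proof.
  revert i. induction k; intros i Hi t; [apply continuous_const |].
  destruct (finite_bound (fun j M => forall t, a <= t <= b -> Rabs (P k t j) <= M) n)
    as [My [HMy0 HMy]].
  { intros j Hj. apply continuous_bounded_on; [lra |]. intros; apply IHk; auto. }
  { intros j M M' H1 H2 s Hs. specialize (H1 s Hs). lra. }
  destruct (continuous_bounded_on (fun s => f s i) a b) as [Mf HMf]; [lra | intros; apply Hf; auto |].
  set (M := INR n * MK * My + Mf).
  assert (HF : forall s, a <= s <= b -> Rabs (ltv_rhs n K f (P k) i s) <= M).
  { intros s Hs. apply ltv_rhs_bound; auto. }
  apply (continuous_lipschitz _ M). intros s. simpl.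
  replace (c i + RInt (ltv_rhs n K f (P k) i) a (clamp a b s) -
           (c i + RInt (ltv_rhs n K f (P k) i) a (clamp a b t)))
    with (RInt (ltv_rhs n K f (P k) i) a (clamp a b s) - RInt (ltv_rhs n K f (P k) i) a (clamp a b t))
    by ring.
  assert (HM0 : 0 <= M)
    by (specialize (HF a ltac:(lra)); pose proof (Rabs_pos (ltv_rhs n K f (P k) i a)); lra).
  eapply Rle_trans.
  - apply (RInt_lipschitz _ a b M); [apply ltv_rhs_ex_RInt; auto | auto | apply clamp_in; lra ..].
  - apply Rmult_le_compat_l; auto. apply clamp_lipschitz; lra.
Qed.

Lemma picard_ex_RInt k i u v : inV n i -> a <= u <= b -> a <= v <= b ->
  ex_RInt (ltv_rhs n K f (P k) i) u v.
Proof.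
  intros Hi Hu Hv. apply (ex_RInt_subinterval _ a b); auto.
  apply ltv_rhs_ex_RInt; auto. intros; apply picard_continuous; auto.
Qed.

Lemma picard_succ_minus k t i : inV n i -> a <= t <= b ->
  P (S (S k)) t i - P (S k) t i =
  RInt (fun s => ltv_rhs n K f (P (S k)) i s - ltv_rhs n K f (P k) i s) a t.
Proof.
  intros Hi Ht.
  replace (P (S (S k)) t i - P (S k) t i) with ((P (S (S k)) t i - c i) - (P (S k) t i - c i)) by ring.
  rewrite !picard_succ by auto.
  rewrite RInt_minus_R; [reflexivity | apply picard_ex_RInt; auto; lra ..].
Qed.

(* The weight [exp (2 L (t - a))] with [L = n MK + 1] turns the Volterra
   operator into a contraction of ratio 1/2. *)
Lemma picard_step_weighted D : 0 <= D ->
  (forall i t, inV n i -> a <= t <= b -> Rabs (P 1%nat t i - P O t i) <= D) ->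
  forall k i t, inV n i -> a <= t <= b ->
  Rabs (P (S k) t i - P k t i) <= D * exp (2 * (INR n * MK + 1) * (t - a)) * (/2) ^ k.
Proof.
  intros HD0 HD. set (q := INR n * MK). set (w := fun s => exp (2 * (q + 1) * (s - a))).
  assert (Hq : 0 <= q) by (unfold q; pose proof (pos_INR n); nra).
  assert (Hw1 : forall s, a <= s -> 1 <= w s)
    by (intros s Hs; unfold w; pose proof (exp_ineq1_le (2 * (q + 1) * (s - a))); nra).
  assert (Hwc : forall x, continuous w x)
    by (intros; apply ex_derive_continuous_R; unfold w; auto_derive; auto).
  induction k; intros i t Hi Ht; change (exp (2 * (q + 1) * (t - a))) with (w t).
  - simpl pow. rewrite Rmult_1_r. specialize (HD i t Hi Ht). specialize (Hw1 t ltac:(lra)). nra.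
  - set (X := D * (/2) ^ k).
    assert (HX : 0 <= X) by (unfold X; pose proof (pow_le (/2) k ltac:(lra)); nra).
    rewrite picard_succ_minus by auto.
    eapply Rle_trans.
    + apply (Rabs_RInt_le _ (fun s => q * X * w s)); [lra | | |].
      * apply ex_RInt_minus_R; apply picard_ex_RInt; auto; lra.
      * apply ex_RInt_scal_R, ex_RInt_continuous_R. auto.
      * intros s Hs. replace (q * X * w s) with (INR n * MK * (D * w s * (/2) ^ k))
          by (unfold q, X; ring).
        apply Rabs_ltv_rhs_minus_le; auto.
        -- intros j Hj; apply HMK; auto; lra.
        -- intros j Hj. apply IHk; auto; lra.
    + rewrite RInt_scal_R by (apply ex_RInt_continuous_R; auto).
      unfold w. rewrite RInt_exp_affine by lra. fold (w t).
      specialize (Hw1 t ltac:(lra)).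
      assert (q * X * (w t - 1) <= (q + 1) * (X * w t)) by nra.
      replace (q * X * ((w t - 1) / (2 * (q + 1)))) with (q * X * (w t - 1) * / (2 * (q + 1)))
        by (field; lra).
      apply Rle_trans with ((q + 1) * (X * w t) * / (2 * (q + 1))).
      * apply Rmult_le_compat_r; auto. left; apply Rinv_0_lt_compat; lra.
      * right. unfold X. simpl pow. field. lra.
Qed.

Lemma picard_geometric : exists C, 0 <= C /\
  forall k i t, inV n i -> Rabs (P (S k) t i - P k t i) <= C * (/2) ^ k.
Proof.
  destruct (finite_bound (fun i M => forall t, a <= t <= b -> Rabs (P 1%nat t i - P O t i) <= M) n)
    as [D [HD0 HD]].
  { intros i Hi. apply continuous_bounded_on; [lra |].
    intros. apply continuous_minus_R; apply picard_continuous; auto. }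
  { intros i M M' H1 H2 t Ht. specialize (H1 t Ht). lra. }
  set (W := exp (2 * (INR n * MK + 1) * (b - a))).
  assert (HW : 0 < W) by apply exp_pos.
  exists (D * W). split; [nra |]. intros k i t Hi.
  pose proof (clamp_in a b t ltac:(lra)).
  rewrite (picard_at_clamp (S k)), (picard_at_clamp k).
  eapply Rle_trans; [apply (picard_step_weighted D); auto; intros; apply HD; auto |].
  apply Rmult_le_compat_r; [apply pow_le; lra |]. apply Rmult_le_compat_l; auto.
  assert (Hle : 2 * (INR n * MK + 1) * (clamp a b t - a) <= 2 * (INR n * MK + 1) * (b - a))
    by (assert (0 <= INR n * MK) by (apply Rmult_le_pos; [apply pos_INR | auto]); nra).
  destruct Hle as [Hlt | ->]; [left; apply exp_increasing; auto | right; reflexivity].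
Qed.

Definition picard_limit (t : R) (i : nat) : R := real (Lim_seq (fun k => P k t i)).

Lemma picard_limit_approx : exists C, 0 <= C /\
  forall k i t, inV n i -> Rabs (picard_limit t i - P k t i) <= C * (/2) ^ k.
Proof.
  destruct picard_geometric as [C [HC H]]. exists (2 * C). split; [lra |].
  intros k i t Hi. apply (geometric_Lim_seq (fun k => P k t i) C). intros; auto.
Qed.

Lemma picard_limit_solves :
  (forall i, inV n i -> forall t, continuous (fun s => picard_limit s i) t) /\
  (forall i, inV n i -> picard_limit a i = c i) /\
  (forall t i, a <= t <= b -> inV n i ->
     is_RInt (ltv_rhs n K f picard_limit i) a t (picard_limit t i - c i)).
Proof.
  destruct picard_limit_approx as [C [HC Happrox]].
  assert (Hcont : forall i, inV n i -> forall t, continuous (fun s => picard_limit s i) t).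
  { intros i Hi t. apply (continuous_geometric_limit (fun k s => P k s i) _ C); auto.
    intros; apply picard_continuous; auto. }
  split; [exact Hcont | split].
  - intros i Hi. apply Rminus_diag_uniq, (zero_of_geometric_bound _ C). intros k.
    rewrite <- (picard_at_a k i). auto.
  - intros t i Ht Hi.
    assert (Hex : ex_RInt (ltv_rhs n K f picard_limit i) a t).
    { apply (ex_RInt_subinterval _ a b); try lra. apply ltv_rhs_ex_RInt; auto. }
    replace (picard_limit t i - c i) with (RInt (ltv_rhs n K f picard_limit i) a t);
      [apply RInt_correct_R; auto |].
    apply Rminus_diag_uniq, (zero_of_geometric_bound _ ((b - a) * (INR n * MK * C) + C)).
    intros k. pose proof (pow_le (/2) k ltac:(lra)).
    replace (RInt (ltv_rhs n K f picard_limit i) a t - (picard_limit t i - c i))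
      with (RInt (fun s => ltv_rhs n K f picard_limit i s - ltv_rhs n K f (P k) i s) a t
            - (picard_limit t i - P (S k) t i))
      by (rewrite RInt_minus_R, <- (picard_succ k t i Ht);
          [ring | auto | apply picard_ex_RInt; auto; lra]).
    eapply Rle_trans; [apply Rabs_triang |]. rewrite Rabs_Ropp.
    assert (H1 : Rabs (RInt (fun s => ltv_rhs n K f picard_limit i s - ltv_rhs n K f (P k) i s) a t)
                 <= (t - a) * (INR n * MK * (C * (/2) ^ k))).
    { apply abs_RInt_le_const; [lra | apply ex_RInt_minus_R; auto; apply picard_ex_RInt; auto; lra |].
      intros s Hs. apply Rabs_ltv_rhs_minus_le; auto. intros j Hj; apply HMK; auto; lra. }
    assert (H2 : Rabs (picard_limit t i - P (S k) t i) <= C * (/2) ^ k).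
    { eapply Rle_trans; [apply Happrox; auto |]. simpl pow. nra. }
    assert ((t - a) * (INR n * MK * (C * (/2) ^ k)) <= (b - a) * (INR n * MK * (C * (/2) ^ k))).
    { apply Rmult_le_compat_r; [| lra]. pose proof (pos_INR n). repeat apply Rmult_le_pos; lra. }
    nra.
Qed.

End Picard.

Lemma ltv_integral_equation_solvable n a b K f c : a < b ->
  (forall i j, inV n i -> inV n j -> piecewise_continuous_on a b (fun t => K t i j)) ->
  (forall i, inV n i -> forall t, continuous (fun s => f s i) t) ->
  exists y : R -> nat -> R,
    (forall i, inV n i -> forall t, continuous (fun s => y s i) t) /\
    (forall i, inV n i -> y a i = c i) /\
    (forall t i, a <= t <= b -> inV n i -> is_RInt (ltv_rhs n K f y i) a t (y t i - c i)).
Proof.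
  intros Hab HK Hf.
  destruct (finite_bound (fun i M => forall j t, inV n j -> a <= t <= b -> Rabs (K t i j) <= M) n)
    as [MK [HMK0 HMK]].
  - intros i Hi.
    destruct (finite_bound (fun j M => forall t, a <= t <= b -> Rabs (K t i j) <= M) n) as [M [_ HM]].
    + intros j Hj. apply piecewise_continuous_on_bounded, HK; auto.
    + intros j M M' H1 H2 t Ht. specialize (H1 t Ht). lra.
    + exists M. intros j t Hj Ht. apply HM; auto.
  - intros i M M' H1 H2 j t Hj Ht. specialize (H1 j t Hj Ht). lra.
  - exists (picard_limit n a b K f c).
    apply (picard_limit_solves n a b K f c Hab HK Hf MK HMK0). intros; apply HMK; auto.
Qed.

(** * The adjoint equation *)

Lemma is_RInt_reflect (F : R -> R) a b t l :
  is_RInt F a (a + b - t) l -> is_RInt (fun y => F (a + b - y)) t b l.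
Proof.
  intros H.
  assert (H1 := is_RInt_swap (V := R_NormedModule) F (a + b - t) a l H).
  assert (H2 := is_RInt_comp_lin (V := R_NormedModule) F (-1) (a + b) t b (opp l)).
  replace (-1 * t + (a + b)) with (a + b - t) in H2 by ring.
  replace (-1 * b + (a + b)) with a in H2 by ring.
  apply (is_RInt_opp (V := R_NormedModule)) in H2; [| exact H1].
  replace l with (opp (opp l)) by (unfold opp; simpl; ring).
  eapply (is_RInt_ext (V := R_NormedModule)); [| exact H2]. intros x _.
  unfold opp, scal; simpl. unfold mult; simpl.
  replace (-1 * x + (a + b)) with (a + b - x) by ring. ring.
Qed.

(* [lam' = - A^T lam] on [a, b], in integral form. *)
Definition adjoint_solution n (A : R -> nat -> nat -> R) (lam : R -> nat -> R) (a b : R) : Prop :=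
  forall t j, a <= t <= b -> inV n j ->
    is_RInt (fun r => sum_to n (fun i => A r i j * lam r i)) t b (lam t j - lam b j).

(* It is the forward equation for the time-reversed transpose [s |-> A (a + b - s)^T]. *)
Lemma adjoint_equation_solvable n a b (A : R -> nat -> nat -> R) (eta : nat -> R) : a < b ->
  (forall i j, inV n i -> inV n j -> piecewise_continuous_on a b (fun t => A t i j)) ->
  exists lam : R -> nat -> R,
    (forall j, inV n j -> forall t, continuous (fun s => lam s j) t) /\
    (forall j, inV n j -> lam b j = eta j) /\ adjoint_solution n A lam a b.
Proof.
  intros Hab HA. set (At := fun s j i => A (a + b - s) i j).
  destruct (ltv_integral_equation_solvable n a b At (fun _ _ => 0) eta Hab) as [mu [Hc [Ha He]]].
  - intros j i Hj Hi. apply (piecewise_continuous_on_reflect a b (fun t => A t i j)). auto.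
  - intros; apply continuous_const.
  - exists (fun t j => mu (a + b - t) j). split; [| split].
    + intros j Hj t. apply (continuous_comp_R (fun t => a + b - t) (fun s => mu s j));
        [apply continuous_const_minus | apply Hc; auto].
    + intros j Hj. replace (a + b - b) with a by ring. auto.
    + intros t j Ht Hj. replace (a + b - b) with a by ring. rewrite Ha by auto.
      apply (is_RInt_ext_R (fun y => ltv_rhs n At (fun _ _ => 0) mu j (a + b - y))).
      * intros x. unfold ltv_rhs, At. rewrite Rplus_0_r.
        replace (a + b - (a + b - x)) with x by ring. reflexivity.
      * apply is_RInt_reflect, He; auto; lra.
Qed.

Lemma is_derive_RInt_R (F I : R -> R) a t :
  (exists d, 0 < d /\ forall s, Rabs (s - t) < d -> is_RInt F a s (I s)) ->
  continuous F t -> is_derive I t (F t).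
Proof.
  intros H Hc. apply (is_derive_RInt (V := R_NormedModule) F I a t); auto. apply locally_R. auto.
Qed.

Lemma is_derive_RInt'_R (F I : R -> R) b t :
  (exists d, 0 < d /\ forall s, Rabs (s - t) < d -> is_RInt F s b (I s)) ->
  continuous F t -> is_derive I t (- F t).
Proof.
  intros H Hc. apply (is_derive_RInt' (V := R_NormedModule) F I t b); auto. apply locally_R. auto.
Qed.

Lemma is_derive_plus_const (f : R -> R) c t l : is_derive (fun s => f s - c) t l -> is_derive f t l.
Proof.
  intros H.
  assert (H' := is_derive_plus_R (fun s => f s - c) (fun _ => c) t l 0 H ltac:(auto_derive; auto)).
  rewrite Rplus_0_r in H'.
  eapply (is_derive_ext (K := R_AbsRing) (V := R_NormedModule)); [| exact H'].
  intros s. unfold Rminus. rewrite Rplus_assoc, Rplus_opp_l, Rplus_0_r. reflexivity.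
Qed.

Lemma zero_of_RInt_zero (G : R -> R) a b r : a < r < b -> continuous G r ->
  (forall t, a <= t <= b -> is_RInt G t b 0) -> G r = 0.
Proof.
  intros Hr Hc H. destruct (near_interior a b r Hr) as [d [Hd Hnear]].
  assert (H1 : is_derive (fun _ => 0) r (- G r)).
  { apply (is_derive_RInt'_R G (fun _ => 0) b r); auto.
    exists d. split; auto. intros s Hs. specialize (Hnear s Hs). apply H. lra. }
  assert (H2 : is_derive (fun _ => 0) r 0) by (auto_derive; auto).
  assert (E := is_derive_unique _ _ _ H1). rewrite (is_derive_unique _ _ _ H2) in E. lra.
Qed.

Lemma derive_zero_off_finite (h : R -> R) (L : list R) : forall a b, a <= b ->
  (forall t, a <= t <= b -> continuous h t) ->
  (forall t, a < t < b -> ~ In t L -> is_derive h t 0) -> h a = h b.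
Proof.
  induction L as [| p L IH]; intros a b Hab Hc Hd.
  - destruct (MVT_gen h a b (fun _ => 0)) as [c [_ Hc']]; [| | lra].
    + rewrite Rmin_left, Rmax_right by lra. intros x Hx. apply Hd; auto.
    + rewrite Rmin_left, Rmax_right by lra. intros x Hx.
      apply continuity_pt_filterlim, Hc; auto.
  - assert (Hskip : forall u v, a <= u -> v <= b -> ~ (u < p < v) ->
              forall t, u < t < v -> ~ In t L -> is_derive h t 0).
    { intros u v Hu Hv Hp t Ht HL. apply Hd; [lra |]. intros [E | E]; [subst; lra | auto]. }
    destruct (Rlt_dec a p); [destruct (Rlt_dec p b) |].
    + transitivity (h p); apply IH; try lra; try (intros; apply Hc; lra);
        apply Hskip; lra.
    + apply IH; auto. apply Hskip; lra.
    + apply IH; auto. apply Hskip; lra.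
Qed.

Lemma finite_exceptions (P : nat -> R -> Prop) n :
  (forall k, (1 <= k <= n)%nat -> exists L : list R, forall t, ~ In t L -> P k t) ->
  exists L : list R, forall k t, (1 <= k <= n)%nat -> ~ In t L -> P k t.
Proof.
  induction n; intros H; [exists []; intros; lia |].
  destruct IHn as [L1 H1]; [intros; apply H; lia |].
  destruct (H (S n)) as [L2 H2]; [lia |].
  exists (L1 ++ L2). intros k t Hk Ht.
  destruct (Nat.eq_dec k (S n)) as [-> | Hne].
  - apply H2. intros Hin; apply Ht, in_or_app; auto.
  - apply H1; [lia |]. intros Hin; apply Ht, in_or_app; auto.
Qed.

Lemma piecewise_continuous_on_matrix n a b (A : R -> nat -> nat -> R) :
  (forall i j, inV n i -> inV n j -> piecewise_continuous_on a b (fun t => A t i j)) ->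
  exists L : list R, forall i j t, inV n i -> inV n j -> a < t < b -> ~ In t L ->
    continuous (fun s => A s i j) t.
Proof.
  intros H.
  destruct (finite_exceptions
              (fun i t => forall j, inV n j -> a < t < b -> continuous (fun s => A s i j) t) n)
    as [L HL]; [| exists L; intros; apply HL; auto].
  intros i Hi.
  destruct (finite_exceptions (fun j t => a < t < b -> continuous (fun s => A s i j) t) n)
    as [L HL]; [| exists L; intros; apply HL; auto].
  intros j Hj. destruct (piecewise_continuous_on_continuous_off a b (fun s => A s i j)) as [L HL];
    [apply H; auto |].
  exists L. intros; apply HL; auto.
Qed.

Lemma ltv_rhs_continuous n K f y i t :
  (forall j, inV n j -> continuous (fun s => K s i j) t) ->
  (forall j, inV n j -> continuous (fun s => y s j) t) ->
  continuous (fun s => f s i) t -> continuous (ltv_rhs n K f y i) t.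
Proof.
  intros HK Hy Hf. apply continuous_plus_R; auto.
  apply (continuous_sum_to n (fun j s => K s i j * y s j)). intros j Hj.
  apply continuous_mult_R; auto.
Qed.

(* [d/dt <lam, x> = <- A^T lam, x> + <lam, A x + f> = <lam, f>]. *)
Lemma adjoint_pairing n (A : nat -> nat -> R) (lam x f : nat -> R) :
  sum_to n (fun i => - sum_to n (fun j => A j i * lam j) * x i
                     + lam i * (sum_to n (fun j => A i j * x j) + f i))
  = sum_to n (fun i => lam i * f i).
Proof.
  rewrite (sum_to_ext n _ (fun i => (-1) * sum_to n (fun j => A j i * lam j * x i)
                                    + (sum_to n (fun j => A i j * lam i * x j) + lam i * f i))).
  - rewrite !sum_to_plus, sum_to_scal_l, sum_to_swap. ring.
  - intros i _. rewrite (sum_to_scal_r n (x i) (fun j => A j i * lam j)).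
    rewrite (sum_to_ext n (fun j => A i j * lam i * x j) (fun j => lam i * (A i j * x j)))
      by (intros; ring).
    rewrite sum_to_scal_l. ring.
Qed.

Lemma adjoint_duality n a b (A : R -> nat -> nat -> R) (f x lam : R -> nat -> R) : a < b ->
  (forall i j, inV n i -> inV n j -> piecewise_continuous_on a b (fun t => A t i j)) ->
  (forall i, inV n i -> forall t, continuous (fun s => f s i) t) ->
  (forall i, inV n i -> forall t, continuous (fun s => x s i) t) ->
  (forall i, inV n i -> forall t, continuous (fun s => lam s i) t) ->
  (forall t, a <= t <= b -> forall i, inV n i -> is_RInt (ltv_rhs n A f x i) a t (x t i - x a i)) ->
  adjoint_solution n A lam a b ->
  sum_to n (fun i => lam b i * x b i) - sum_to n (fun i => lam a i * x a i) =
  RInt (fun s => sum_to n (fun i => lam s i * f s i)) a b.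
Proof.
  intros Hab HA Hf Hx Hl Hxe Hle.
  set (g := fun s => sum_to n (fun i => lam s i * f s i)).
  assert (Hg : forall t, continuous g t).
  { intros t. apply (continuous_sum_to n (fun i s => lam s i * f s i)).
    intros; apply continuous_mult_R; auto. }
  assert (HgD : forall t, is_derive (fun s => RInt g a s) t (g t)).
  { intros t. apply (is_derive_RInt_R _ _ a); auto. exists 1. split; [lra |].
    intros s _. apply RInt_correct_R, ex_RInt_continuous_R. auto. }
  set (h := fun t => sum_to n (fun i => lam t i * x t i) - RInt g a t).
  destruct (piecewise_continuous_on_matrix n a b A HA) as [L HL].
  assert (E : h a = h b).
  { apply (derive_zero_off_finite h L a b); [lra | |].
    - intros t _. apply continuous_minus_R.
      + apply (continuous_sum_to n (fun i s => lam s i * x s i)).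
        intros; apply continuous_mult_R; auto.
      + apply ex_derive_continuous_R. eexists. apply HgD.
    - intros t Ht HtL. destruct (near_interior a b t Ht) as [d [Hd Hnear]].
      set (G := fun j r => sum_to n (fun i => A r i j * lam r i)).
      assert (HxD : forall i, inV n i -> is_derive (fun s => x s i) t (ltv_rhs n A f x i t)).
      { intros i Hi. apply (is_derive_plus_const _ (x a i)), (is_derive_RInt_R _ _ a).
        - exists d. split; auto. intros s Hs. specialize (Hnear s Hs). apply Hxe; auto; lra.
        - apply ltv_rhs_continuous; auto. }
      assert (HlD : forall j, inV n j -> is_derive (fun s => lam s j) t (- G j t)).
      { intros j Hj. apply (is_derive_plus_const _ (lam b j)), (is_derive_RInt'_R _ _ b).
        - exists d. split; auto. intros s Hs. specialize (Hnear s Hs). apply Hle; auto; lra.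
        - apply (continuous_sum_to n (fun i r => A r i j * lam r i)). intros i Hi.
          apply continuous_mult_R; auto. }
      replace 0 with (sum_to n (fun i => - G i t * x t i + lam t i * ltv_rhs n A f x i t) - g t)
        by (unfold G, ltv_rhs, g; rewrite adjoint_pairing; ring).
      apply is_derive_minus_R; auto.
      apply (is_derive_sum_to n (fun i s => lam s i * x s i)
               (fun i s => - G i s * x s i + lam s i * ltv_rhs n A f x i s)).
      intros i Hi. apply is_derive_mult_R; auto. }
  unfold h in E. rewrite RInt_point_R in E. fold g. lra.
Qed.

(** * Null sets *)

Definition total_length (a b : nat -> R) (l : list nat) : R :=
  fold_right (fun k s => (b k - a k) + s) 0 l.

Lemma total_length_nonneg a b l : (forall k, a k <= b k) -> 0 <= total_length a b l.
Proof. intros H. induction l; simpl; [lra |]. specialize (H a0). lra. Qed.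

Lemma total_length_remove a b k l : (forall k, a k <= b k) -> In k l ->
  (b k - a k) + total_length a b (remove Nat.eq_dec k l) <= total_length a b l.
Proof.
  intros H. induction l as [| k' l IH]; simpl; intros Hin; [tauto |].
  assert (Hrem : forall l, total_length a b (remove Nat.eq_dec k l) <= total_length a b l).
  { induction l0; simpl; [lra |]. destruct (Nat.eq_dec k a0); simpl; specialize (H a0); lra. }
  destruct (Nat.eq_dec k k') as [-> | Hne].
  - specialize (Hrem l). lra.
  - simpl. destruct Hin as [E | Hin]; [congruence |]. specialize (IH Hin). lra.
Qed.

Lemma total_length_app a b l1 l2 :
  total_length a b (l1 ++ l2) = total_length a b l1 + total_length a b l2.
Proof. induction l1; simpl; [lra |]. rewrite IHl1; lra. Qed.

Lemma psum_total_length a b K : psum K (fun k => b k - a k) = total_length a b (seq 0 K).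
Proof. induction K; [simpl; lra |]. rewrite seq_S, total_length_app, <- IHK. simpl. lra. Qed.

Lemma covering_length_le a b : (forall k, a k <= b k) ->
  forall l c x, c <= x -> (forall t, c <= t <= x -> exists k, In k l /\ a k < t < b k) ->
  x - c <= total_length a b l.
Proof.
  intros Hab l. remember (length l) as m eqn:Hm. revert l Hm.
  induction m as [m IH] using lt_wf_ind. intros l Hm c x Hcx Hcov.
  destruct (Hcov c) as [k0 [Hk0 Hc0]]; [lra |].
  pose proof (total_length_remove a b k0 l Hab Hk0).
  pose proof (total_length_nonneg a b (remove Nat.eq_dec k0 l) Hab).
  destruct (Rlt_dec x (b k0)); [lra |].
  assert (x - b k0 <= total_length a b (remove Nat.eq_dec k0 l)); [| lra].
  apply (IH (length (remove Nat.eq_dec k0 l))); [subst; apply remove_length_lt; auto | auto | lra |].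
  intros t Ht. destruct (Hcov t) as [k [Hk Hkt]]; [lra |]. exists k. split; [| auto].
  apply in_in_remove; auto. intros ->; lra.
Qed.

Lemma finite_subcover (a b : nat -> R) c d : c < d ->
  (forall t, c <= t <= d -> exists k, a k < t < b k) ->
  exists K, forall t, c <= t <= d -> exists k, (k < K)%nat /\ a k < t < b k.
Proof.
  intros Hcd Hcov.
  set (E := fun x => c <= x <= d /\
              exists K, forall t, c <= t <= x -> exists k, (k < K)%nat /\ a k < t < b k).
  assert (Ec : E c).
  { split; [lra |]. destruct (Hcov c) as [k0 Hk0]; [lra |].
    exists (S k0). intros t Ht. exists k0. split; [lia |]. replace t with c by lra. auto. }
  destruct (completeness E) as [s [Hub Hlub]];
    [exists d; intros x [Hx _]; lra | exists c; auto |].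
  assert (Hcs : c <= s) by (apply Hub; auto).
  assert (Hsd : s <= d) by (apply Hlub; intros x [Hx _]; lra).
  destruct (Hcov s) as [k1 Hk1]; [lra |].
  destruct (classic (exists x, E x /\ a k1 < x)) as [[x [[Hx [K HK]] Hax]] | Hno].
  2: { exfalso. assert (s <= a k1); [| lra].
       apply Hlub. intros x Ex. apply Rnot_lt_le. intros Hlt. apply Hno. exists x; auto. }
  (* Past [x], the interval of index [k1] covers everything up to [b k1]. *)
  assert (Hy : forall y, c <= y <= d -> y < b k1 ->
                 exists K', forall t, c <= t <= y -> exists k, (k < K')%nat /\ a k < t < b k).
  { intros y Hyd Hyb. exists (Nat.max K (S k1)). intros t Ht.
    destruct (Rle_dec t x).
    - destruct (HK t) as [k [Hk Hkt]]; [lra |]. exists k; split; [lia | auto].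
    - exists k1. split; [lia | lra]. }
  destruct (Rle_dec d ((s + b k1) / 2)).
  - apply Hy; lra.
  - exfalso. assert (E ((s + b k1) / 2)) by (split; [lra | apply Hy; lra]).
    apply Hub in H. lra.
Qed.

Lemma null_set_contains_no_interval N c d :
  lebesgue_null N -> c < d -> ~ (forall t, c <= t <= d -> N t).
Proof.
  intros HN Hcd Hall. destruct (HN ((d - c) / 2) ltac:(lra)) as [a [b [Hab [Hcov Hsum]]]].
  destruct (finite_subcover a b c d Hcd) as [K HK]; [intros; apply Hcov, Hall; auto |].
  assert (d - c <= total_length a b (seq 0 K)).
  { apply covering_length_le; auto; [lra |]. intros t Ht.
    destruct (HK t Ht) as [k [Hk Hkt]]. exists k. split; auto. apply in_seq. lia. }
  rewrite <- psum_total_length in H. specialize (Hsum K). lra.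
Qed.

Lemma interval_avoiding_finite (L : list R) c d : c < d ->
  exists c' d', c < c' /\ c' < d' /\ d' < d /\ forall t, c' <= t <= d' -> ~ In t L.
Proof.
  revert c d. induction L as [| p L IH]; intros c d Hcd.
  - exists (c + (d - c) / 3), (c + 2 * (d - c) / 3). repeat split; try lra. intros t _ [].
  - set (m := (c + d) / 2).
    destruct (Rle_dec p m);
      [destruct (IH m d) as [c' [d' [H1 [H2 [H3 H4]]]]]
      | destruct (IH c m) as [c' [d' [H1 [H2 [H3 H4]]]]]];
      try (unfold m; lra); exists c', d'; repeat split; try (unfold m in *; lra);
      intros t Ht [E | E]; solve [lra | apply (H4 t Ht E)].
Qed.

Lemma continuous_zero_off_null (v : R -> R) a b N L : a < b -> lebesgue_null N ->
  (forall t, continuous v t) -> (forall r, a < r < b -> ~ In r L -> ~ N r -> v r = 0) ->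
  forall t, a <= t <= b -> v t = 0.
Proof.
  intros Hab HN Hv H t Ht. apply NNPP. intros Hne.
  assert (Hpos : 0 < Rabs (v t)) by (apply Rabs_pos_lt; auto).
  destruct (proj1 (continuous_eps_delta v t) (Hv t) (Rabs (v t)) Hpos) as [e [He Hd]].
  set (c := Rmax a (t - e / 2)). set (d := Rmin b (t + e / 2)).
  assert (Hc1 : a <= c /\ t - e / 2 <= c) by (unfold c, Rmax; destruct Rle_dec; lra).
  assert (Hd1 : d <= b /\ d <= t + e / 2) by (unfold d, Rmin; destruct Rle_dec; lra).
  assert (Hcd : c < d) by (unfold c, d, Rmax, Rmin in *; repeat destruct Rle_dec; lra).
  destruct (interval_avoiding_finite L c d Hcd) as [c' [d' [H1 [H2 [H3 H4]]]]].
  apply (null_set_contains_no_interval N c' d' HN H2). intros r Hr. apply NNPP. intros HNr.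
  assert (Hr0 : v r = 0) by (apply H; [lra | apply H4; auto | auto]).
  assert (Hrt : Rabs (r - t) < e) by (apply Rabs_def1; lra).
  specialize (Hd r Hrt). rewrite Hr0, Rminus_0_l, Rabs_Ropp in Hd. lra.
Qed.

(** * Chains *)

Lemma NoDup_app_disjoint {A : Type} (l1 l2 : list A) x :
  NoDup (l1 ++ l2) -> In x l1 -> In x l2 -> False.
Proof.
  intros H H1 H2. apply in_split in H2. destruct H2 as [u [w ->]].
  rewrite app_assoc in H. apply NoDup_remove_2 in H. apply H, in_or_app. left; apply in_or_app; auto.
Qed.

Lemma concat_NoDup_same (C : list (list nat)) c c' x : NoDup (concat C) ->
  In c C -> In c' C -> In x c -> In x c' -> c = c'.
Proof.
  induction C as [| c0 C IH]; simpl; intros Hnd Hc Hc' Hx Hx'; [tauto |].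
  destruct Hc as [E | Hc]; destruct Hc' as [E' | Hc']; subst; auto.
  - exfalso. apply (NoDup_app_disjoint c (concat C) x Hnd Hx), in_concat. eauto.
  - exfalso. apply (NoDup_app_disjoint c' (concat C) x Hnd Hx'), in_concat. eauto.
  - apply IH; auto. eapply NoDup_app_remove_l; eauto.
Qed.

Lemma concat_NoDup_In (C : list (list nat)) c : NoDup (concat C) -> In c C -> NoDup c.
Proof.
  induction C as [| c0 C IH]; simpl; intros Hnd Hc; [tauto |].
  destruct Hc as [<- | Hc]; [eapply NoDup_app_remove_r; eauto |].
  apply IH; auto. eapply NoDup_app_remove_l; eauto.
Qed.

Lemma chain_position_unique n C c c' i j : chains_ok n C -> In c C -> In c' C ->
  (i < length c)%nat -> (j < length c')%nat -> nth i c 0%nat = nth j c' 0%nat -> c = c' /\ i = j.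
Proof.
  intros [_ [Hnd _]] Hc Hc' Hi Hj E.
  assert (Ec : c = c').
  { apply (concat_NoDup_same C c c' (nth i c 0%nat)); auto; [apply nth_In; auto |].
    rewrite E. apply nth_In; auto. }
  subst c'. split; auto. apply (NoDup_nth c 0%nat); auto. eapply concat_NoDup_In; eauto.
Qed.

Lemma chain_edge_inV n C u v : chains_ok n C -> chain_edge C u v -> inV n u /\ inV n v.
Proof.
  intros [_ [_ HV]] [c [Hc [i [Hi [<- <-]]]]].
  split; apply HV, in_concat; exists c; split; auto; apply nth_In; lia.
Qed.

Lemma source_inV n C s : chains_ok n C -> is_source C s -> inV n s.
Proof.
  intros [_ [_ HV]] [c [Hc Hh]]. apply HV, in_concat. exists c. split; auto.
  destruct c; simpl in Hh; [congruence |]. injection Hh as ->. simpl; auto.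
Qed.

Lemma source_or_chain_successor n C v : chains_ok n C -> inV n v ->
  is_source C v \/ exists p, chain_edge C p v.
Proof.
  intros [_ [_ HV]] Hv. apply HV, in_concat in Hv. destruct Hv as [c [Hc Hvc]].
  destruct (In_nth c v 0%nat Hvc) as [[| i] [Hi E]].
  - left. exists c. split; auto. destruct c; simpl in *; [lia | congruence].
  - right. exists (nth i c 0%nat), c. split; auto. exists i. auto.
Qed.

Lemma chain_edge_functional n C p v w : chains_ok n C ->
  chain_edge C p v -> chain_edge C p w -> v = w.
Proof.
  intros Hok [c [Hc [i [Hi [Ep <-]]]]] [c' [Hc' [j [Hj [Ep' <-]]]]].
  destruct (chain_position_unique n C c c' i j) as [<- <-]; auto; try lia; congruence.
Qed.

Lemma chain_edge_irrefl n C p v : chains_ok n C -> chain_edge C p v -> p <> v.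
Proof.
  intros Hok [c [Hc [i [Hi [<- Ev]]]]] E.
  destruct (chain_position_unique n C c c i (S i)); auto; lia.
Qed.

Lemma source_no_predecessor n C s p : chains_ok n C -> is_source C s -> ~ chain_edge C p s.
Proof.
  intros Hok [[| x c] [Hc Hh]] [c' [Hc' [i [Hi [Ep Ev]]]]]; simpl in Hh; [congruence |].
  injection Hh as <-.
  destruct (chain_position_unique n C (x :: c) c' 0 (S i)); simpl; auto; lia.
Qed.

Lemma succ_chain_notin c p : ~ In p c -> succ_chain c p = None.
Proof.
  induction c as [| x c IH]; intros H; simpl; auto. destruct c as [| y c']; auto.
  destruct (Nat.eqb_spec x p) as [-> | Hne]; [exfalso; apply H; simpl; auto |].
  apply IH. intros Hin; apply H; simpl; auto.
Qed.

Lemma succ_chain_nth c i : NoDup c -> (S i < length c)%nat ->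
  succ_chain c (nth i c 0%nat) = Some (nth (S i) c 0%nat).
Proof.
  revert i. induction c as [| x c IH]; intros i Hnd Hi; simpl in Hi; [lia |].
  destruct c as [| y c']; simpl in Hi; [lia |].
  destruct i; [simpl; rewrite Nat.eqb_refl; auto |].
  change (succ_chain (x :: y :: c') (nth i (y :: c') 0%nat) = Some (nth (S i) (y :: c') 0%nat)).
  inversion Hnd as [| ? ? Hx Hnd']; subst.
  change (succ_chain (x :: y :: c') ?v) with (if Nat.eqb x v then Some y else succ_chain (y :: c') v).
  destruct (Nat.eqb_spec x (nth i (y :: c') 0%nat)) as [E | Hne].
  - exfalso. apply Hx. rewrite E. apply nth_In. simpl; lia.
  - apply IH; auto. simpl; lia.
Qed.

Lemma succ_of_chain_edge n C p v : chains_ok n C -> chain_edge C p v -> succ C p = Some v.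
Proof.
  intros [_ [Hnd _]] [c [Hc [i [Hi [Ep Ev]]]]]. clear - Hnd Hc Hi Ep Ev.
  induction C as [| c0 C IH]; simpl in *; [tauto |].
  destruct Hc as [<- | Hc].
  - subst. rewrite succ_chain_nth; auto. eapply NoDup_app_remove_r; eauto.
  - rewrite succ_chain_notin; [apply IH; auto; eapply NoDup_app_remove_l; eauto |].
    intros Hin. apply (NoDup_app_disjoint c0 (concat C) p Hnd Hin), in_concat.
    exists c. split; auto. subst. apply nth_In; lia.
Qed.

(** * Propagation along the chains *)

Lemma pattern_column_sum n C T E (M : nat -> nat -> R) (lam : nat -> R) p v :
  chains_ok n C -> time_function n C T -> in_graph_class n C T E -> in_Q n E M ->
  chain_edge C p v -> (forall i, inV n i -> (T i < T v)%nat -> lam i = 0) ->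
  sum_to n (fun i => M i p * lam i) = M v p * lam v.
Proof.
  intros Hok [Tf1 [Tf2 [Tf3 Tf4]]] [_ [_ HE]] HQ Hpv Hlam.
  destruct (chain_edge_inV n C p v Hok Hpv) as [Hp Hv].
  assert (HTpv := Tf4 p v Hpv).
  apply (sum_to_single n (fun i => M i p * lam i) v Hv). intros i Hi Hiv.
  destruct (Nat.lt_ge_cases (T i) (T v)) as [Hlt | Hge]; [rewrite Hlam by auto; ring |].
  assert (Hins : ~ is_source C i).
  { intros Hs. rewrite (Tf2 i Hs) in Hge. specialize (Tf1 p Hp). lia. }
  assert (Hvns : ~ is_source C v) by (intros Hs; apply (source_no_predecessor n C v p Hok Hs Hpv)).
  assert (T i <> T v) by (apply Tf3; auto).
  assert (HnE : ~ E p i).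
  { apply HE; auto.
    - intros Hpi. apply Hiv, (chain_edge_functional n C p); auto.
    - unfold Tmax. rewrite (succ_of_chain_edge n C p v Hok Hpv). lia. }
  assert (Hip : i <> p) by (intros ->; lia).
  replace (M i p) with 0; [ring |].
  apply NNPP. intros Hne. apply HnE, (HQ i p Hi Hp Hip). auto.
Qed.

Lemma adjoint_zero_of_zero_on_sources n C T a b (A : R -> nat -> nat -> R) N (lam : R -> nat -> R) :
  chains_ok n C -> time_function n C T -> a < b ->
  lebesgue_null N -> (forall t, ~ N t -> in_P n C T (A t)) ->
  (forall i j, inV n i -> inV n j -> piecewise_continuous_on a b (fun t => A t i j)) ->
  (forall j, inV n j -> forall t, continuous (fun s => lam s j) t) ->
  adjoint_solution n A lam a b ->
  (forall s, is_source C s -> forall t, a <= t <= b -> lam t s = 0) ->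
  forall v, inV n v -> forall t, a <= t <= b -> lam t v = 0.
Proof.
  intros Hok Htf Hab HN HP HA Hl Hle Hsrc.
  destruct (piecewise_continuous_on_matrix n a b A HA) as [L HL].
  assert (Main : forall tau v, inV n v -> (T v <= tau)%nat -> forall t, a <= t <= b -> lam t v = 0);
    [| intros v Hv; apply (Main (T v)); auto].
  induction tau; intros v Hv HTv; [pose proof (proj1 Htf v Hv); lia |].
  destruct (Nat.le_gt_cases (T v) tau) as [Hle' | Hgt]; [apply IHtau; auto |].
  destruct (source_or_chain_successor n C v Hok Hv) as [Hs | [p Hp]]; [apply Hsrc; auto |].
  assert (HTpv := proj2 (proj2 (proj2 Htf)) p v Hp).
  destruct (chain_edge_inV n C p v Hok Hp) as [HpV _].
  assert (Hlp : forall t, a <= t <= b -> lam t p = 0) by (apply IHtau; auto; lia).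
  apply (continuous_zero_off_null (fun s => lam s v) a b N L); auto.
  intros r Hr HrL HrN. destruct (HP r HrN) as [E [HE HQ]].
  assert (HG0 : sum_to n (fun i => A r i p * lam r i) = 0).
  { apply (zero_of_RInt_zero (fun r => sum_to n (fun i => A r i p * lam r i)) a b r Hr).
    - apply (continuous_sum_to n (fun i r => A r i p * lam r i)). intros i Hi.
      apply continuous_mult_R; [apply HL | apply Hl]; auto.
    - intros t Ht. specialize (Hle t p Ht HpV).
      rewrite (Hlp t Ht), (Hlp b ltac:(lra)), Rminus_diag in Hle. exact Hle. }
  rewrite (pattern_column_sum n C T E (A r) (lam r) p v Hok Htf HE HQ Hp) in HG0.
  - apply Rmult_integral in HG0. destruct HG0 as [Hz | Hz]; auto. exfalso.
    assert (Hpv : p <> v) by (apply (chain_edge_irrefl n C); auto).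
    apply (proj2 (HQ v p Hv HpV (not_eq_sym Hpv))); auto. apply (proj1 (proj2 HE)); auto.
  - intros i Hi HTi. apply IHtau; [auto | lia | lra].
Qed.

(** * Linear algebra and the input matrix *)

Module SquareSystem.
Import all_boot all_algebra Rstruct GRing.Theory.
Local Open Scope ring_scope.

Lemma sum_to_big n (f : nat -> R) : sum_to n f = \sum_(k < n) f k.+1.
Proof. elim: n => [|n IH]; first by rewrite big_ord0. by rewrite big_ord_recr /= IH. Qed.

Lemma inV_ord n i : inV n i -> {k : 'I_n | i = k.+1}.
Proof.
  rewrite /inV => Hi; have Hlt : (i.-1 < n)%N by apply/ltP; case: i Hi => /= [|i]; lia.
  by exists (Ordinal Hlt); case: i Hi Hlt => [|i] Hi; [lia | ].
Qed.

Lemma injective_surjective n (M : nat -> nat -> R) :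
  (forall eta : nat -> R, (forall i, inV n i -> sum_to n (fun j => Rmult (M i j) (eta j)) = R0) ->
     forall j, inV n j -> eta j = R0) ->
  forall z : nat -> R, exists eta : nat -> R,
    forall i, inV n i -> sum_to n (fun j => Rmult (M i j) (eta j)) = z i.
Proof.
move=> Hinj z.
pose A : 'M[R]_n := \matrix_(i < n, j < n) M i.+1 j.+1.
pose vec (v : 'I_n -> R) (j : nat) := \sum_(k < n | k.+1 == j) v k.
have vecE v (k : 'I_n) : vec v k.+1 = v k.
  by rewrite /vec (eq_bigl (pred1 k)) ?big_pred1_eq.
have mulE v (k : 'I_n) : sum_to n (fun j => Rmult (M k.+1 j) (vec v j)) = \sum_j A k j * v j.
  by rewrite sum_to_big; apply: eq_bigr => j _; rewrite vecE mxE.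
have HA : A \in unitmx.
  rewrite unitmxE unitfE -det_tr; apply/negP => /det0P [v Hv0 Hv].
  apply/negP: Hv0; rewrite negbK; apply/eqP/rowP => j; rewrite mxE -(vecE (v 0)).
  apply: Hinj; last by split; [lia | apply/leP; exact: ltn_ord].
  move=> i /inV_ord [k ->]; rewrite mulE.
  have := congr1 (fun m : 'rV_n => m 0 k) Hv; rewrite !mxE => E.
  transitivity (\sum_l v 0 l * A^T l k); last by rewrite E.
  by apply: eq_bigr => l _; rewrite !mxE mulrC.
pose w := invmx A *m \col_(i < n) z i.+1.
exists (vec (fun k => w k 0)) => i /inV_ord [k ->]; rewrite mulE.
have := congr1 (fun m : 'cV_n => m k 0) (mulKVmx HA (\col_(i < n) z i.+1)).
by rewrite !mxE.
Qed.

End SquareSystem.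

Lemma Bmul_aux_notin js k0 w i : ~ In i js -> Bmul_aux js k0 w i = 0.
Proof.
  revert k0. induction js as [| j js IH]; intros k0 H; simpl; auto.
  destruct (Nat.eqb_spec j i) as [-> | Hne]; [exfalso; apply H; simpl; auto |].
  rewrite IH; [ring |]. intros Hin; apply H; simpl; auto.
Qed.

Lemma Bmul_aux_continuous js k0 (w : R -> nat -> R) i t :
  (forall k, continuous (fun s => w s k) t) -> continuous (fun s => Bmul_aux js k0 (w s) i) t.
Proof.
  revert k0. induction js as [| j js IH]; intros k0 H; simpl; [apply continuous_const |].
  apply continuous_plus_R; auto. destruct (Nat.eqb j i); auto. apply continuous_const.
Qed.

Lemma Bmul_aux_linear n js k0 (eta : nat -> R) (w : nat -> nat -> R) i :
  Bmul_aux js k0 (fun k => sum_to n (fun j => eta j * w j k)) i =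
  sum_to n (fun j => eta j * Bmul_aux js k0 (w j) i).
Proof.
  revert k0. induction js as [| j js IH]; intros k0; simpl.
  - symmetry. apply sum_to_zero. intros; ring.
  - rewrite IH. destruct (Nat.eqb j i).
    + rewrite <- sum_to_plus. apply sum_to_ext. intros; ring.
    + rewrite Rplus_0_l. apply sum_to_ext. intros; ring.
Qed.

Definition sum_squares (lam : nat -> R) (js : list nat) : R :=
  fold_right (fun j s => lam j * lam j + s) 0 js.

Lemma sum_squares_nonneg lam js : 0 <= sum_squares lam js.
Proof. induction js; simpl; [lra |]. pose proof (Rle_0_sqr (lam a)). unfold Rsqr in H. lra. Qed.

Lemma sum_squares_zero lam js : sum_squares lam js = 0 -> forall j, In j js -> lam j = 0.
Proof.
  induction js as [| a js IH]; simpl; intros H j Hj; [tauto |].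
  pose proof (Rle_0_sqr (lam a)). unfold Rsqr in H0. pose proof (sum_squares_nonneg lam js).
  destruct Hj as [<- | Hj]; [apply Rsqr_0_uniq; unfold Rsqr; lra | apply IH; auto; lra].
Qed.

Lemma sum_squares_continuous (lam : R -> nat -> R) js t :
  (forall j, In j js -> continuous (fun s => lam s j) t) ->
  continuous (fun s => sum_squares (lam s) js) t.
Proof.
  induction js as [| a js IH]; simpl; intros H; [apply continuous_const |].
  apply continuous_plus_R; [apply continuous_mult_R; apply H | apply IH]; auto.
Qed.

(* With the input [w = B^T lam], the pairing [<lam, B w>] is [|B^T lam|^2]. *)
Lemma Bmul_aux_transpose n js k0 (lam w : nat -> R) : (forall j, In j js -> inV n j) ->
  (forall m, (m < length js)%nat -> w (k0 + m)%nat = lam (nth m js 0%nat)) ->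
  sum_to n (fun i => lam i * Bmul_aux js k0 w i) = sum_squares lam js.
Proof.
  revert k0. induction js as [| j js IH]; intros k0 HV Hw; simpl; [apply sum_to_zero; intros; ring |].
  rewrite (sum_to_ext n _ (fun i => lam i * (if Nat.eqb j i then w k0 else 0)
                                    + lam i * Bmul_aux js (S k0) w i)) by (intros; ring).
  rewrite sum_to_plus, IH.
  - rewrite (sum_to_single n _ j), Nat.eqb_refl; [| apply HV; simpl; auto |].
    + specialize (Hw O ltac:(simpl; lia)). rewrite Nat.add_0_r in Hw. rewrite Hw. simpl. ring.
    + intros k Hk Hkj. destruct (Nat.eqb_spec j k); [congruence | ring].
  - intros; apply HV; simpl; auto.
  - intros m Hm. replace (S k0 + m)%nat with (k0 + S m)%nat by lia. apply Hw. simpl; lia.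
Qed.

(** * Controllability *)

Lemma Bmul_aux_zero js k0 i : Bmul_aux js k0 (fun _ => 0) i = 0.
Proof.
  revert k0. induction js; intros k0; simpl; [reflexivity |]. rewrite IHjs. destruct Nat.eqb; ring.
Qed.

Lemma ltv_solution_exists n A VC (u : R -> nat -> R) (x0 : nat -> R) t0 t1 : t0 < t1 ->
  (forall i j, inV n i -> inV n j -> piecewise_continuous_on t0 t1 (fun t => A t i j)) ->
  (forall k t, continuous (fun s => u s k) t) ->
  exists x, (forall i, inV n i -> forall t, continuous (fun s => x s i) t) /\
            (forall i, inV n i -> x t0 i = x0 i) /\ ltv_solution n A VC u x t0 t1.
Proof.
  intros Hab HA Hu.
  destruct (ltv_integral_equation_solvable n t0 t1 A (fun s i => Bmul VC (u s) i) x0 Hab HA)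
    as [x [Hc [H0 Hx]]]; [intros; apply Bmul_aux_continuous; auto |].
  exists x. split; [| split]; auto. intros t Ht i Hi. rewrite H0 by auto. apply Hx; auto.
Qed.

Lemma ltv_solution_add_free n A VC (u x z : R -> nat -> R) t0 t1 :
  ltv_solution n A VC (fun _ _ => 0) z t0 t1 -> ltv_solution n A VC u x t0 t1 ->
  ltv_solution n A VC u (fun t i => z t i + x t i) t0 t1.
Proof.
  intros Hz Hx t Ht i Hi.
  apply (is_RInt_ext_R (fun s => (Amul n (A s) (z s) i + Bmul VC (fun _ => 0) i)
                               + (Amul n (A s) (x s) i + Bmul VC (u s) i))).
  - intros s. unfold Amul, Bmul. rewrite Bmul_aux_zero.
    rewrite (sum_to_ext n (fun j => A s i j * (z s j + x s j))
               (fun j => A s i j * z s j + A s i j * x s j)) by (intros; ring).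
    rewrite sum_to_plus. ring.
  - replace (z t i + x t i - (z t0 i + x t0 i)) with ((z t i - z t0 i) + (x t i - x t0 i)) by ring.
    apply is_RInt_plus_R; [apply Hz | apply Hx]; auto.
Qed.

Lemma ltv_solution_lincomb n A VC (u x : nat -> R -> nat -> R) (eta : nat -> R) t0 t1 :
  (forall j, inV n j -> ltv_solution n A VC (u j) (x j) t0 t1) ->
  ltv_solution n A VC (fun s k => sum_to n (fun j => eta j * u j s k))
                      (fun s i => sum_to n (fun j => eta j * x j s i)) t0 t1.
Proof.
  intros Hx t Ht i Hi.
  apply (is_RInt_ext_R
           (fun s => sum_to n (fun j => eta j * (Amul n (A s) (x j s) i + Bmul VC (u j s) i)))).
  - intros s. unfold Amul, Bmul. rewrite Bmul_aux_linear.
    rewrite (sum_to_ext n _ (fun j => sum_to n (fun k => eta j * (A s i k * x j s k))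
                                      + eta j * Bmul_aux VC 0 (u j s) i))
      by (intros; rewrite sum_to_scal_l; ring).
    rewrite sum_to_plus, sum_to_swap. f_equal. apply sum_to_ext. intros k _.
    rewrite <- sum_to_scal_l. apply sum_to_ext. intros; ring.
  - rewrite <- sum_to_minus.
    rewrite (sum_to_ext n (fun j => eta j * x j t i - eta j * x j t0 i)
               (fun j => eta j * (x j t i - x j t0 i))) by (intros; ring).
    apply (is_RInt_sum_to n (fun j s => eta j * (Amul n (A s) (x j s) i + Bmul VC (u j s) i))).
    intros j Hj. apply is_RInt_scal_R, Hx; auto.
Qed.

Lemma adjoint_solution_lincomb n A (lam : nat -> R -> nat -> R) (eta : nat -> R) a b :
  (forall j, inV n j -> adjoint_solution n A (lam j) a b) ->
  adjoint_solution n A (fun s i => sum_to n (fun j => eta j * lam j s i)) a b.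
Proof.
  intros Hl t i Ht Hi.
  apply (is_RInt_ext_R (fun r => sum_to n (fun j => eta j * sum_to n (fun k => A r k i * lam j r k)))).
  - intros r. rewrite (sum_to_ext n _ (fun j => sum_to n (fun k => eta j * (A r k i * lam j r k))))
      by (intros; rewrite sum_to_scal_l; ring).
    rewrite sum_to_swap. apply sum_to_ext. intros k _.
    rewrite <- sum_to_scal_l. apply sum_to_ext. intros; ring.
  - rewrite <- sum_to_minus.
    rewrite (sum_to_ext n (fun j => eta j * lam j t i - eta j * lam j b i)
               (fun j => eta j * (lam j t i - lam j b i))) by (intros; ring).
    apply (is_RInt_sum_to n (fun j r => eta j * sum_to n (fun k => A r k i * lam j r k))).
    intros j Hj. apply is_RInt_scal_R, Hl; auto.
Qed.

Definition chain_adjacency (C : list (list nat)) (_ : R) (i j : nat) : R :=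
  if excluded_middle_informative (chain_edge C j i) then 1 else 0.

Lemma chain_adjacency_in_P n C T t : chains_ok n C -> in_P n C T (chain_adjacency C t).
Proof.
  intros Hok. exists (chain_edge C). split; [split; [| split] |].
  - intros u v Huv. apply (chain_edge_inV n C); auto.
  - auto.
  - intros u v _ _ Hnc _ Hce. contradiction.
  - intros i j _ _ _. unfold chain_adjacency.
    destruct excluded_middle_informative; split; intros; auto; lra.
Qed.

Lemma almost_everywhere_of_forall (P : R -> Prop) : (forall t, P t) -> almost_everywhere P.
Proof.
  intros H. exists (fun _ => False). split; [| auto].
  intros eps He. exists (fun _ => 0), (fun _ => 0). split; [intros; lra |]. split; [intros t [] |].
  intros K. replace (psum K (fun _ => 0 - 0)) with 0; [lra |].
  induction K; simpl; [reflexivity |]. rewrite <- IHK. ring.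
Qed.

Lemma uncontrolled_source_constant n C VC u x t0 t1 s : chains_ok n C -> t0 <= t1 ->
  is_source C s -> ~ In s VC -> ltv_solution n (chain_adjacency C) VC u x t0 t1 -> x t1 s = x t0 s.
Proof.
  intros Hok Hab Hs HnIn Hsol.
  specialize (Hsol t1 ltac:(lra) s (source_inV n C s Hok Hs)).
  apply (is_RInt_ext_R _ (fun _ => 0)), is_RInt_unique_R in Hsol.
  - rewrite (is_RInt_unique_R _ _ _ _ (is_RInt_const_R t0 t1 0)), Rmult_0_r in Hsol. lra.
  - intros r. unfold Amul, Bmul. rewrite Bmul_aux_notin, sum_to_zero; [ring | | auto].
    intros k _. unfold chain_adjacency. destruct excluded_middle_informative as [He | He]; [| ring].
    exfalso. apply (source_no_predecessor n C s k Hok Hs He).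
Qed.

Lemma sources_in_VC_of_controllable n C T t0 t1 VC : chains_ok n C -> t0 < t1 ->
  (forall A, mat_piecewise_continuous n A -> almost_everywhere (fun t => in_P n C T (A t)) ->
     controllable n A VC t0 t1) ->
  forall s, is_source C s -> In s VC.
Proof.
  intros Hok Hab Hall s Hs. apply NNPP. intros HnIn.
  destruct (Hall (chain_adjacency C))
    with (fun _ : nat => 0) (fun i : nat => if Nat.eqb i s then 1 else 0)
    as [u [x [_ [Hsol Hend]]]].
  - intros i j _ _. apply piecewise_continuous_of_continuous. intros; apply continuous_const.
  - apply almost_everywhere_of_forall. intros; apply chain_adjacency_in_P; auto.
  - destruct (Hend s (source_inV n C s Hok Hs)) as [E0 E1]. rewrite Nat.eqb_refl in E1.
    pose proof (uncontrolled_source_constant n C VC u x t0 t1 s Hok ltac:(lra) Hs HnIn Hsol). lra.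
Qed.

(* The input [B^T lam] (entries of [lam] at the nodes of [VC], in order). *)
Definition transpose_input (VC : list nat) (lam : R -> nat -> R) (t : R) (k : nat) : R :=
  if Nat.ltb k (length VC) then lam t (nth k VC 0%nat) else 0.

Section Sufficiency.

Variables (n : nat) (C : list (list nat)) (T : nat -> nat) (t0 t1 : R) (VC : list nat).
Variables (A : R -> nat -> nat -> R) (N : R -> Prop).
Hypothesis Hok : chains_ok n C.
Hypothesis Htf : time_function n C T.
Hypothesis Hab : t0 < t1.
Hypothesis HVC : forall j, In j VC -> inV n j.
Hypothesis Hsrc : forall s, is_source C s -> In s VC.
Hypothesis HA : forall i j, inV n i -> inV n j -> piecewise_continuous_on t0 t1 (fun t => A t i j).
Hypothesis HN : lebesgue_null N.
Hypothesis HP : forall t, ~ N t -> in_P n C T (A t).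

Lemma transpose_input_continuous lam :
  (forall j, inV n j -> forall t, continuous (fun s => lam s j) t) ->
  forall k t, continuous (fun s => transpose_input VC lam s k) t.
Proof.
  intros Hl k t. unfold transpose_input. destruct (Nat.ltb_spec k (length VC));
    [apply Hl, HVC, nth_In; auto | apply continuous_const].
Qed.

Lemma observability (lam x u : R -> nat -> R) :
  (forall j, inV n j -> forall t, continuous (fun s => lam s j) t) -> adjoint_solution n A lam t0 t1 ->
  (forall i, inV n i -> forall t, continuous (fun s => x s i) t) -> (forall i, inV n i -> x t0 i = 0) ->
  (forall k t, continuous (fun s => u s k) t) ->
  (forall s m, (m < length VC)%nat -> u s m = lam s (nth m VC 0%nat)) ->
  ltv_solution n A VC u x t0 t1 -> sum_to n (fun i => lam t1 i * x t1 i) = 0 ->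
  forall j, inV n j -> lam t1 j = 0.
Proof.
  intros Hlc Hla Hxc Hx0 Huc Hu Hx Hpair j Hj.
  assert (Hsq : forall s, sum_to n (fun i => lam s i * Bmul VC (u s) i) = sum_squares (lam s) VC)
    by (intros s; apply Bmul_aux_transpose; auto).
  assert (Hdual := adjoint_duality n t0 t1 A (fun s i => Bmul VC (u s) i) x lam Hab HA
                     ltac:(intros; apply Bmul_aux_continuous; auto) Hxc Hlc Hx Hla).
  rewrite Hpair, (sum_to_zero n (fun i => lam t0 i * x t0 i)) in Hdual
    by (intros i Hi; rewrite Hx0 by auto; ring).
  rewrite (RInt_ext_R _ (fun s => sum_squares (lam s) VC)) in Hdual by (intros; apply Hsq).
  assert (Hz : forall t, t0 <= t <= t1 -> sum_squares (lam t) VC = 0).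
  { apply (continuous_nonneg_RInt_zero (fun s => sum_squares (lam s) VC) t0 t1 Hab).
    - intros t. apply sum_squares_continuous. auto.
    - intros; apply sum_squares_nonneg.
    - lra. }
  apply (adjoint_zero_of_zero_on_sources n C T t0 t1 A N lam); auto; [| lra].
  intros s Hs t Ht. apply (sum_squares_zero (lam t) VC (Hz t Ht)). auto.
Qed.

Variables (LAM XX : nat -> R -> nat -> R).
Hypothesis HLAMc : forall j i, inV n i -> forall t, continuous (fun s => LAM j s i) t.
Hypothesis HLAM1 : forall j i, inV n i -> LAM j t1 i = if Nat.eqb i j then 1 else 0.
Hypothesis HLAMa : forall j, adjoint_solution n A (LAM j) t0 t1.
Hypothesis HXXc : forall j i, inV n i -> forall t, continuous (fun s => XX j s i) t.
Hypothesis HXX0 : forall j i, inV n i -> XX j t0 i = 0.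
Hypothesis HXXs : forall j, ltv_solution n A VC (transpose_input VC (LAM j)) (XX j) t0 t1.

Let lincomb (F : nat -> R -> nat -> R) (eta : nat -> R) (t : R) (i : nat) : R :=
  sum_to n (fun j => eta j * F j t i).

Lemma lincomb_continuous F eta : (forall j i, inV n i -> forall t, continuous (fun s => F j s i) t) ->
  forall i, inV n i -> forall t, continuous (fun s => lincomb F eta s i) t.
Proof.
  intros HF i Hi t. apply (continuous_sum_to n (fun j s => eta j * F j s i)). intros j Hj.
  apply continuous_mult_R; [apply continuous_const | auto].
Qed.

(* [XX j t1] is the [j]-th column of the controllability Gramian. *)
Lemma gramian_injective (eta : nat -> R) :
  (forall i, inV n i -> sum_to n (fun j => XX j t1 i * eta j) = 0) -> forall j, inV n j -> eta j = 0.
Proof.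
  intros Heta j Hj.
  assert (Hterm : forall i, inV n i -> lincomb LAM eta t1 i = eta i).
  { intros i Hi. unfold lincomb. rewrite (sum_to_single n _ i Hi).
    - rewrite HLAM1, Nat.eqb_refl by auto. ring.
    - intros k Hk Hki. rewrite HLAM1 by auto. destruct (Nat.eqb_spec i k); [congruence | ring]. }
  rewrite <- Hterm by auto.
  apply (observability (lincomb LAM eta) (lincomb XX eta)
           (lincomb (fun j => transpose_input VC (LAM j)) eta));
    auto using lincomb_continuous.
  - apply adjoint_solution_lincomb. auto.
  - intros i Hi. apply sum_to_zero. intros k _. rewrite HXX0 by auto. ring.
  - intros k t. apply (continuous_sum_to n (fun j s => eta j * transpose_input VC (LAM j) s k)).
    intros i Hi. apply continuous_mult_R; [apply continuous_const |].
    apply transpose_input_continuous. auto.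
  - intros s m Hm. unfold lincomb, transpose_input. apply sum_to_ext. intros i _.
    destruct (Nat.ltb_spec m (length VC)); [reflexivity | lia].
  - apply ltv_solution_lincomb. auto.
  - apply sum_to_zero. intros i Hi. unfold lincomb at 2.
    rewrite (sum_to_ext n _ (fun k => XX k t1 i * eta k)) by (intros; ring). rewrite Heta by auto. ring.
Qed.

Lemma controllable_of_gramian : controllable n A VC t0 t1.
Proof.
  intros x0 xf.
  destruct (ltv_solution_exists n A VC (fun _ _ => 0) x0 t0 t1 Hab HA) as [Z [_ [HZ0 HZ]]];
    [intros; apply continuous_const |].
  destruct (SquareSystem.injective_surjective n (fun i j => XX j t1 i) gramian_injective
              (fun i => xf i - Z t1 i)) as [eta Heta].
  exists (lincomb (fun j => transpose_input VC (LAM j)) eta), (fun t i => Z t i + lincomb XX eta t i).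
  split; [| split].
  - intros k _. apply piecewise_continuous_of_continuous. intros t.
    apply (continuous_sum_to n (fun j s => eta j * transpose_input VC (LAM j) s k)). intros i Hi.
    apply continuous_mult_R; [apply continuous_const | apply transpose_input_continuous; auto].
  - apply ltv_solution_add_free; [exact HZ |]. apply ltv_solution_lincomb. auto.
  - intros i Hi. unfold lincomb. split.
    + rewrite HZ0, sum_to_zero by (auto; intros k _; rewrite HXX0 by auto; ring). ring.
    + rewrite (sum_to_ext n _ (fun j => XX j t1 i * eta j)), Heta by (auto || (intros; ring)). ring.
Qed.

End Sufficiency.

Lemma controllable_of_sources_in_VC n C T t0 t1 VC A : chains_ok n C -> time_function n C T ->
  t0 < t1 -> (forall j, In j VC -> inV n j) -> (forall s, is_source C s -> In s VC) ->
  mat_piecewise_continuous n A -> almost_everywhere (fun t => in_P n C T (A t)) ->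
  controllable n A VC t0 t1.
Proof.
  intros Hok Htf Hab HVC Hsrc HApc [N [HN HP]].
  assert (HA : forall i j, inV n i -> inV n j -> piecewise_continuous_on t0 t1 (fun t => A t i j))
    by (intros; apply piecewise_continuous_on_of; auto; apply HApc; auto).
  destruct (choice (fun j lam => (forall i, inV n i -> forall t, continuous (fun s => lam s i) t) /\
                                 (forall i, inV n i -> lam t1 i = if Nat.eqb i j then 1 else 0) /\
                                 adjoint_solution n A lam t0 t1))
    as [LAM HLAM]; [intros j; apply adjoint_equation_solvable; auto |].
  destruct (choice (fun j x => (forall i, inV n i -> forall t, continuous (fun s => x s i) t) /\
                               (forall i, inV n i -> x t0 i = 0) /\
                               ltv_solution n A VC (transpose_input VC (LAM j)) x t0 t1))
    as [XX HXX].
  { intros j. apply ltv_solution_exists; auto.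
    apply (transpose_input_continuous n VC HVC), (proj1 (HLAM j)). }
  apply (controllable_of_gramian n C T t0 t1 VC A N Hok Htf Hab HVC Hsrc HA HN HP LAM XX);
    intros; apply HLAM || apply HXX; auto.
Qed.

Theorem theorem9 (n : nat) (C : list (list nat)) (T : nat -> nat)
    (t0 t1 : R) (VC : list nat) :
  chains_ok n C -> time_function n C T -> t0 < t1 ->
  NoDup VC -> (forall j, In j VC -> inV n j) ->
  ((forall A : R -> nat -> nat -> R,
      mat_piecewise_continuous n A ->
      almost_everywhere (fun t => in_P n C T (A t)) ->
      controllable n A VC t0 t1)
   <-> (forall s, is_source C s -> In s VC)).
Proof.
  intros Hok Htf Hab _ HVC. split.
  - apply (sources_in_VC_of_controllable n C T t0 t1 VC Hok Hab).
  - intros Hsrc A HApc Hae. apply (controllable_of_sources_in_VC n C T); auto.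
Qed.
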